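(* Assume $\gamma$ is radial and satisfies, near $r=\sqrt{x^2+y^2}=0$, $\gamma(r)=h+\frac{r^2}{2R_1}+\frac{r^4}{8R_3^3}+O(r^6)$. Let $f_0\in\mathbb R$ and let $\varpi_0$ be the unique solution of $-\frac1{12}\mathrm{div}(\gamma^3\nabla\varpi_0)=f_0$ in $B(\mathbf 0,L)$, $\varpi_0=0$ on $\partial B(\mathbf 0,L)$. Then $$\int_{B(\mathbf 0,L)}\gamma^3|\nabla\varpi_0|^2=72\pi|f_0|^2\Big[\frac{R_1^2}{h}-\frac{3R_1^4}{R_3^3}|\ln h|\Big]+O(1),$$ where $O(1)$ denotes a quantity bounded, for all $h\in(0,1]$, by a constant independent of $h$.
   Context: $R,S>0$ are the radii of two spheres, $0<L<\min(R,S)$, and $R_1,R_3>0$ are defined by $\frac1{R_1}=\frac1S+\frac1R$, $\frac1{R_3^3}=\frac1{S^3}+\frac1{R^3}$. On $B(\mathbf 0,L)\subset\mathbb R^2$, $\gamma_t(x,y)=S-\sqrt{S^2-x^2-y^2}$, $\gamma_b(x,y)=-R+\sqrt{R^2-x^2-y^2}$ and, for $h>0$, $\gamma=h+\gamma_t-\gamma_b$. *)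

From Stdlib Require Import Reals Lra.
From Coquelicot Require Import Coquelicot.
Open Scope R_scope.

(* Radii: Rad = R (bottom sphere), Srad = S (top sphere). *)
Definition radR1 (Rad Srad : R) : R := / (/ Srad + / Rad).
Definition radR3 (Rad Srad : R) : R := Rpower (/ (/ Srad ^ 3 + / Rad ^ 3)) (1 / 3).

Definition gamma_t (Srad x y : R) : R := Srad - sqrt (Srad ^ 2 - x ^ 2 - y ^ 2).
Definition gamma_b (Rad x y : R) : R := - Rad + sqrt (Rad ^ 2 - x ^ 2 - y ^ 2).
Definition gamma (Rad Srad h x y : R) : R := h + gamma_t Srad x y - gamma_b Rad x y.

Definition in_cdisk (L : R) (p : R * R) : Prop := fst p ^ 2 + snd p ^ 2 <= L ^ 2.

Definition dx (w : R -> R -> R) (x y : R) : R := Derive (fun t => w t y) x.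
Definition dy (w : R -> R -> R) (x y : R) : R := Derive (fun t => w x t) y.

Definition is_solution (g : R -> R -> R) (L f0 : R) (w : R -> R -> R) : Prop :=
  (forall x y, x ^ 2 + y ^ 2 <= L ^ 2 ->
     filterlim (fun p : R * R => w (fst p) (snd p))
       (within (in_cdisk L) (locally (x, y))) (locally (w x y))) /\
  (forall x y, x ^ 2 + y ^ 2 = L ^ 2 -> w x y = 0) /\
  (forall x y, x ^ 2 + y ^ 2 < L ^ 2 ->
     ex_derive (fun t => w t y) x /\
     ex_derive (fun t => w x t) y /\
     ex_derive (fun t => g t y ^ 3 * dx w t y) x /\
     ex_derive (fun t => g x t ^ 3 * dy w x t) y /\
     - (1 / 12) * (Derive (fun t => g t y ^ 3 * dx w t y) x
                   + Derive (fun t => g x t ^ 3 * dy w x t) y) = f0).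

Definition energy (g : R -> R -> R) (L : R) (w : R -> R -> R) : R :=
  RInt (fun x =>
    RInt (fun y => g x y ^ 3 * (dx w x y ^ 2 + dy w x y ^ 2))
         (- sqrt (L ^ 2 - x ^ 2)) (sqrt (L ^ 2 - x ^ 2)))
    (- L) L.

(* For constant [f0] the problem is radially symmetric. With [q = x^2 + y^2] and
   [G(q)] the gap at radius [sqrt q], the function [w(x, y) = Phi(x^2 + y^2)] with
   [Phi' = -3 f0 / G^3] and [Phi(L^2) = 0] is a classical solution, and a maximum
   principle (perturbing by a multiple of a radial barrier) shows it is the only one.
   Its energy density is [36 f0^2 q / G(q)^3], and the integral of any continuous
   radial function [k(x^2 + y^2)] over the disk is [pi * int_0^(L^2) k], so the
   energy is [36 pi f0^2 int_0^(L^2) q / G(q)^3]. Expanding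
   [G(q) = h + q / (2 R1) + q^2 / (8 R3^3) + O(q^3)] and integrating the two model
   terms in closed form gives [1 / (2 a^2 h) + 3 b ln h / a^4 + O(1)] for that
   integral, with [a = 1 / (2 R1)] and [b = 1 / (8 R3^3)]. *)

From Stdlib Require Import Reals Lra ClassicalEpsilon.
From Coquelicot Require Import Coquelicot.
Open Scope R_scope.

Lemma RInt_plus_R (f g : R -> R) a b : ex_RInt f a b -> ex_RInt g a b ->
  RInt (fun x => f x + g x) a b = RInt f a b + RInt g a b.
Proof. intros; apply (RInt_plus (V:=R_CompleteNormedModule)); auto. Qed.

Lemma RInt_minus_R (f g : R -> R) a b : ex_RInt f a b -> ex_RInt g a b ->
  RInt (fun x => f x - g x) a b = RInt f a b - RInt g a b.
Proof. intros; apply (RInt_minus (V:=R_CompleteNormedModule)); auto. Qed.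

Lemma RInt_scal_R (f : R -> R) c a b : ex_RInt f a b ->
  RInt (fun x => c * f x) a b = c * RInt f a b.
Proof. intros; apply (RInt_scal (V:=R_CompleteNormedModule)); auto. Qed.

Lemma RInt_const_R c a b : RInt (fun _ => c) a b = (b - a) * c.
Proof. apply (RInt_const (V:=R_CompleteNormedModule)). Qed.

Lemma RInt_Chasles_R (f : R -> R) a b c : ex_RInt f a b -> ex_RInt f b c ->
  RInt f a b + RInt f b c = RInt f a c.
Proof. intros; apply (RInt_Chasles (V:=R_CompleteNormedModule)); auto. Qed.

Lemma opp_RInt_swap_R (f : R -> R) a b : ex_RInt f a b -> - RInt f a b = RInt f b a.
Proof. intros; apply (opp_RInt_swap (V:=R_CompleteNormedModule)); auto. Qed.

Lemma ex_RInt_scal_R (f : R -> R) c a b : ex_RInt f a b -> ex_RInt (fun x => c * f x) a b.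
Proof. intros; apply (ex_RInt_scal (V:=R_NormedModule)); auto. Qed.

Lemma ex_RInt_plus_R (f g : R -> R) a b :
  ex_RInt f a b -> ex_RInt g a b -> ex_RInt (fun x => f x + g x) a b.
Proof. intros; apply (ex_RInt_plus (V:=R_NormedModule)); auto. Qed.

Lemma ex_RInt_minus_R (f g : R -> R) a b :
  ex_RInt f a b -> ex_RInt g a b -> ex_RInt (fun x => f x - g x) a b.
Proof. intros; apply (ex_RInt_minus (V:=R_NormedModule)); auto. Qed.

Lemma RInt_ext_R (f g : R -> R) a b :
  (forall x, Rmin a b < x < Rmax a b -> f x = g x) -> RInt f a b = RInt g a b.
Proof. apply (RInt_ext (V:=R_CompleteNormedModule)). Qed.

Lemma ex_RInt_continuous_on (f : R -> R) a b :
  (forall z, Rmin a b <= z <= Rmax a b -> continuity_pt f z) -> ex_RInt f a b.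
Proof.
  intros H. apply (@ex_RInt_continuous R_CompleteNormedModule).
  intros z Hz. apply continuity_pt_filterlim. auto.
Qed.

Lemma ex_RInt_continuous_R (f : R -> R) a b :
  (forall z, continuity_pt f z) -> ex_RInt f a b.
Proof. intros H. apply ex_RInt_continuous_on. intros; apply H. Qed.

Lemma ex_RInt_continuous_le (f : R -> R) a b : a <= b ->
  (forall z, a <= z <= b -> continuity_pt f z) -> ex_RInt f a b.
Proof.
  intros Hab H. apply ex_RInt_continuous_on. intros z Hz.
  rewrite Rmin_left, Rmax_right in Hz by lra. auto.
Qed.

Lemma continuity_pt_cst (c x : R) : continuity_pt (fun _ => c) x.
Proof. apply continuity_pt_const. intros u v; reflexivity. Qed.

Lemma continuity_pt_of_ex_derive (f : R -> R) x : ex_derive f x -> continuity_pt f x.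
Proof.
  intros H. apply continuity_pt_filterlim.
  apply (ex_derive_continuous (K:=R_AbsRing) (V:=R_NormedModule)). exact H.
Qed.

Lemma is_derive_plus_R (f g : R -> R) x a b :
  is_derive f x a -> is_derive g x b -> is_derive (fun t => f t + g t) x (a + b).
Proof. intros; apply (is_derive_plus (K:=R_AbsRing) (V:=R_NormedModule)); auto. Qed.

Lemma is_derive_mult_R (f g : R -> R) x a b : is_derive f x a -> is_derive g x b ->
  is_derive (fun t => f t * g t) x (a * g x + f x * b).
Proof.
  intros; apply (is_derive_mult (K:=R_AbsRing)); auto. intros; apply Rmult_comm.
Qed.

Lemma is_derive_RInt_R (f : R -> R) a x :
  (forall z, continuity_pt f z) -> is_derive (fun q => RInt f a q) x (f x).
Proof.
  intros Hf. apply (is_derive_RInt (V:=R_NormedModule) f (fun q => RInt f a q) a x).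
  - exists (mkposreal 1 Rlt_0_1). intros b _.
    apply (RInt_correct (V:=R_CompleteNormedModule)). apply ex_RInt_continuous_R, Hf.
  - apply continuity_pt_filterlim, Hf.
Qed.

Lemma at_right_0_of_interval (P : R -> Prop) d : 0 < d ->
  (forall e, 0 < e < d -> P e) -> at_right 0 P.
Proof.
  intros Hd HP. exists (mkposreal d Hd). intros e He He0. apply HP.
  change (Rabs (e - 0) < d) in He. rewrite Rminus_0_r, Rabs_pos_eq in He; lra.
Qed.

Lemma RInt_derive_trim (F f : R -> R) (a b eta M : R) : 0 < eta < (b - a) / 2 ->
  (forall x, a < x < b -> is_derive F x (f x)) ->
  (forall x, a <= x <= b -> continuity_pt f x) ->
  (forall x, a <= x <= b -> Rabs (f x) <= M) ->
  Rabs (RInt f a b - (F b - F a))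
  <= 2 * eta * M + Rabs (F (a + eta) - F a) + Rabs (F (b - eta) - F b).
Proof.
  intros He Hd Hc HM.
  assert (Hex : forall u v, a <= u <= v -> v <= b -> ex_RInt f u v).
  { intros u v H1 H2. apply ex_RInt_continuous_le; [lra|]. intros z Hz. apply Hc; lra. }
  assert (Hend : forall u v, a <= u <= v -> v <= b -> Rabs (RInt f u v) <= (v - u) * M).
  { intros u v H1 H2. apply abs_RInt_le_const; [lra|apply Hex; lra|].
    intros t Ht. apply HM. lra. }
  assert (Hmid : RInt f (a + eta) (b - eta) = F (b - eta) - F (a + eta) :> R).
  { apply is_RInt_unique, (is_RInt_derive F f).
    - intros x Hx. rewrite Rmin_left, Rmax_right in Hx by lra. apply Hd; lra.
    - intros x Hx. rewrite Rmin_left, Rmax_right in Hx by lra.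
      apply continuity_pt_filterlim, Hc; lra. }
  rewrite <- (RInt_Chasles_R f a (a + eta) b), <- (RInt_Chasles_R f (a + eta) (b - eta) b), Hmid
    by (apply Hex; lra).
  pose proof (Hend a (a + eta) ltac:(lra) ltac:(lra)) as E1.
  pose proof (Hend (b - eta) b ltac:(lra) ltac:(lra)) as E2.
  apply Rabs_le_between in E1. apply Rabs_le_between in E2.
  pose proof (proj1 (Rabs_le_between (F (a + eta) - F a) _) (Rle_refl _)).
  pose proof (proj1 (Rabs_le_between (F (b - eta) - F b) _) (Rle_refl _)).
  apply Rabs_le. lra.
Qed.

Lemma RInt_derive_interior (F f : R -> R) (a b : R) : a < b ->
  (forall eps, 0 < eps -> exists d, 0 < d /\
     forall y, a <= y <= b -> Rabs (y - a) < d -> Rabs (F y - F a) < eps) ->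
  (forall eps, 0 < eps -> exists d, 0 < d /\
     forall y, a <= y <= b -> Rabs (y - b) < d -> Rabs (F y - F b) < eps) ->
  (forall x, a < x < b -> is_derive F x (f x)) ->
  (forall x, a <= x <= b -> continuity_pt f x) ->
  RInt f a b = F b - F a :> R.
Proof.
  intros Hab Ha Hb Hd Hc.
  destruct (bounded_continuity f a b) as [M HM].
  { intros x Hx. apply continuity_pt_filterlim. auto. }
  assert (HM' : forall x, a <= x <= b -> Rabs (f x) <= M) by (intros x Hx; left; apply (HM x Hx)).
  assert (HM0 : 0 <= M) by (pose proof (HM' a ltac:(lra)); pose proof (Rabs_pos (f a)); lra).
  apply cond_eq. intros eps Heps.
  assert (Eta : at_right 0 (fun eta => eta < (b - a) / 2 /\ 2 * eta * M < eps / 3)).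
  { apply (at_right_0_of_interval _ (Rmin ((b - a) / 2) (eps / (6 * (M + 1))))).
    - apply Rmin_glb_lt; [lra|apply Rdiv_lt_0_compat; lra].
    - intros e [He0 He].
      pose proof (Rmin_l ((b - a) / 2) (eps / (6 * (M + 1)))).
      pose proof (Rmin_r ((b - a) / 2) (eps / (6 * (M + 1)))). split; [lra|].
      apply Rle_lt_trans with (2 * e * (M + 1)); [nra|].
      apply Rlt_le_trans with (2 * (eps / (6 * (M + 1))) * (M + 1)); [|right; field; lra].
      apply Rmult_lt_compat_r; lra. }
  assert (Ea : at_right 0 (fun eta => eta < (b - a) / 2 -> Rabs (F (a + eta) - F a) < eps / 3)).
  { destruct (Ha (eps / 3) ltac:(lra)) as [d [Hd1 H1]].
    apply (at_right_0_of_interval _ d Hd1). intros e He Hba.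
    apply H1; [lra|rewrite Rabs_pos_eq; lra]. }
  assert (Eb : at_right 0 (fun eta => eta < (b - a) / 2 -> Rabs (F (b - eta) - F b) < eps / 3)).
  { destruct (Hb (eps / 3) ltac:(lra)) as [d [Hd1 H1]].
    apply (at_right_0_of_interval _ d Hd1). intros e He Hba.
    apply H1; [lra|rewrite Rabs_left; lra]. }
  assert (Epos : at_right 0 (fun eta => 0 < eta)) by (apply (at_right_0_of_interval _ 1); [lra|tauto]).
  destruct (Hierarchy.filter_ex _ (filter_and _ _ Epos (filter_and _ _ Eta (filter_and _ _ Ea Eb))))
    as [eta [He0 [[He1 He2] [E3 E4]]]].
  pose proof (RInt_derive_trim F f a b eta M ltac:(lra) Hd Hc HM').
  specialize (E3 He1). specialize (E4 He1). lra.
Qed.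

Lemma RInt_continuous_param (K : R -> R -> R) (x0 a b : R) : a <= b ->
  (forall t, a <= t <= b -> continuity_2d_pt K x0 t) ->
  (exists d, 0 < d /\ forall v, Rabs (v - x0) < d -> ex_RInt (K v) a b) ->
  continuity_pt (fun v => RInt (K v) a b) x0.
Proof.
  intros Hab HK [d0 [Hd0 Hex]].
  unfold continuity_pt, continue_in, limit1_in, limit_in; simpl; unfold R_dist.
  intros eps Heps.
  assert (Hp : 0 < eps / (b - a + 1)) by (apply Rdiv_lt_0_compat; lra).
  destruct (uniform_continuity_2d_1d' K a b x0 HK (mkposreal _ Hp)) as [del Hdel].
  exists (Rmin d0 del). split; [apply Rmin_glb_lt; [lra|apply cond_pos]|].
  intros v [_ Hv].
  assert (Hv0 : Rabs (v - x0) < d0) by (eapply Rlt_le_trans; [exact Hv|apply Rmin_l]).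
  assert (Hv1 : Rabs (v - x0) < del) by (eapply Rlt_le_trans; [exact Hv|apply Rmin_r]).
  assert (Hx0 : Rabs (x0 - x0) < d0) by (rewrite Rminus_diag, Rabs_R0; lra).
  rewrite <- RInt_minus_R by auto.
  apply Rle_lt_trans with ((b - a) * (eps / (b - a + 1))).
  - apply abs_RInt_le_const; [lra|apply ex_RInt_minus_R; auto|].
    intros t Ht. left. apply (Hdel t x0 t v Ht); try assumption.
    + pose proof (cond_pos del); lra.
    + apply Rlt_le, Rabs_le_between in Hv1. lra.
    + rewrite Rminus_diag, Rabs_R0. apply cond_pos.
  - apply Rlt_le_trans with ((b - a + 1) * (eps / (b - a + 1))).
    + apply Rmult_lt_compat_r; lra.
    + right. field. lra.
Qed.

Lemma filterlim_minus_R {T} (F : (T -> Prop) -> Prop) {FF : Filter F} (f g : T -> R) a b :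
  filterlim f F (locally a) -> filterlim g F (locally b) ->
  filterlim (fun t => f t - g t) F (locally (a - b)).
Proof.
  intros Hf Hg.
  assert (Ho : filterlim (fun t => opp (g t)) F (locally (opp b)))
    by exact (filterlim_comp _ _ _ g opp F _ _ Hg (filterlim_opp b)).
  exact (filterlim_comp_2 f (fun t => opp (g t)) plus Hf Ho (filterlim_plus a (opp b))).
Qed.

Lemma continuity_2d_pt_snd (g : R -> R -> R) x y :
  continuity_2d_pt g x y -> continuity_pt (g x) y.
Proof.
  intros H. unfold continuity_pt, continue_in, limit1_in, limit_in; simpl; unfold R_dist.
  intros eps Heps. destruct (H (mkposreal _ Heps)) as [d Hd].
  exists d. split; [apply cond_pos|]. intros v [_ Hv]. apply Hd; [|exact Hv].
  rewrite Rminus_diag, Rabs_R0. apply cond_pos.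
Qed.

(* The section maximum [g x (ym x)] is continuous by uniform continuity of [g] on a strip. *)
Lemma continuity_pt_section_max (g : R -> R -> R) (A : R) (ym : R -> R) :
  (forall x y, continuity_2d_pt g x y) ->
  (forall x, -A <= ym x <= A /\ forall v, -A <= v <= A -> g x v <= g x (ym x)) ->
  forall x0, continuity_pt (fun x => g x (ym x)) x0.
Proof.
  intros Hg Hym x0. unfold continuity_pt, continue_in, limit1_in, limit_in; simpl; unfold R_dist.
  intros eps Heps.
  destruct (uniform_continuity_2d g (x0 - 1) (x0 + 1) (-A) A
     (fun x y _ _ => Hg x y) (mkposreal _ Heps)) as [d Hd].
  exists (Rmin d 1). split; [apply Rmin_glb_lt; [apply cond_pos|lra]|].
  intros x [_ Hx].
  assert (Hx1 : Rabs (x - x0) < d) by (eapply Rlt_le_trans; [exact Hx|apply Rmin_l]).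
  assert (Hx2 : Rabs (x - x0) < 1) by (eapply Rlt_le_trans; [exact Hx|apply Rmin_r]).
  assert (Hx3 : x0 - 1 <= x <= x0 + 1) by (apply Rlt_le, Rabs_le_between in Hx2; lra).
  destruct (Hym x) as [Hb1 Hm1]. destruct (Hym x0) as [Hb0 Hm0].
  assert (E1 : Rabs (g x (ym x0) - g x0 (ym x0)) < eps).
  { apply (Hd x0 (ym x0) x (ym x0)); try lra.
    rewrite Rminus_diag, Rabs_R0; apply cond_pos. }
  assert (E2 : Rabs (g x0 (ym x) - g x (ym x)) < eps).
  { apply (Hd x (ym x) x0 (ym x)); try lra.
    - rewrite Rabs_minus_sym; exact Hx1.
    - rewrite Rminus_diag, Rabs_R0; apply cond_pos. }
  specialize (Hm1 (ym x0) ltac:(lra)). specialize (Hm0 (ym x) ltac:(lra)).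
  apply Rabs_def2 in E1. apply Rabs_def2 in E2. apply Rabs_def1; lra.
Qed.

Lemma continuous_square_max (g : R -> R -> R) (A : R) : 0 <= A ->
  (forall x y, continuity_2d_pt g x y) ->
  exists x y, -A <= x <= A /\ -A <= y <= A /\
    forall u v, -A <= u <= A -> -A <= v <= A -> g u v <= g x y.
Proof.
  intros HA Hg.
  assert (Hy : forall x, { y | -A <= y <= A /\ forall v, -A <= v <= A -> g x v <= g x y }).
  { intros x. apply constructive_indefinite_description.
    destruct (continuity_ab_maj (g x) (-A) A ltac:(lra)) as [ym [H1 H2]].
    - intros c _. apply continuity_2d_pt_snd, Hg.
    - exists ym. split; assumption. }
  set (ym := fun x => proj1_sig (Hy x)).
  assert (Hym : forall x, -A <= ym x <= A /\ forall v, -A <= v <= A -> g x v <= g x (ym x))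
    by (intros x; exact (proj2_sig (Hy x))).
  destruct (continuity_ab_maj (fun x => g x (ym x)) (-A) A ltac:(lra)
    (fun c _ => continuity_pt_section_max g A ym Hg Hym c)) as [xM [HxM1 HxM2]].
  exists xM, (ym xM). destruct (Hym xM) as [Hb _].
  repeat split; try apply HxM2; try apply Hb.
  intros u v Hu Hv. destruct (Hym u) as [_ Hu'].
  eapply Rle_trans; [apply Hu'; exact Hv|]. apply HxM1. exact Hu.
Qed.

Definition clamp (A v : R) : R := Rmax (- A) (Rmin A v).

Lemma clamp_lipschitz A A' v v' : 0 <= A -> 0 <= A' ->
  Rabs (clamp A v - clamp A' v') <= Rabs (A - A') + Rabs (v - v').
Proof.
  intros HA HA'. unfold clamp, Rmax, Rmin.
  repeat destruct Rle_dec; unfold Rabs; repeat destruct Rcase_abs; lra.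
Qed.

Lemma clamp_bounds A v : 0 <= A -> - A <= clamp A v <= A.
Proof. intros HA. unfold clamp, Rmax, Rmin. repeat destruct Rle_dec; lra. Qed.

Lemma clamp_id A v : - A <= v <= A -> clamp A v = v.
Proof. intros H. unfold clamp, Rmax, Rmin. repeat destruct Rle_dec; lra. Qed.

Lemma Rabs_sqrt_minus_le a b : Rabs (sqrt a - sqrt b) <= sqrt (Rabs (a - b)).
Proof.
  assert (Hle : forall a b, b <= a -> Rabs (sqrt a - sqrt b) <= sqrt (Rabs (a - b))).
  { clear a b. intros a b Hab.
    pose proof (sqrt_le_1_alt b a Hab).
    rewrite !Rabs_pos_eq by lra.
    destruct (Rle_dec 0 b) as [Hb|Hb].
    - assert (sqrt a <= sqrt b + sqrt (a - b)); [|lra].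
      pose proof (sqrt_pos b). pose proof (sqrt_pos (a - b)).
      apply Rsqr_incr_0_var; [|lra].
      rewrite Rsqr_sqrt by lra. unfold Rsqr.
      pose proof (sqrt_sqrt b Hb). pose proof (sqrt_sqrt (a - b) ltac:(lra)). nra.
    - rewrite (sqrt_neg_0 b), Rminus_0_r by lra. apply sqrt_le_1_alt. lra. }
  destruct (Rle_dec b a); [apply Hle; lra|].
  rewrite Rabs_minus_sym, (Rabs_minus_sym a b). apply Hle; lra.
Qed.

Definition chord (L x : R) : R := sqrt (L ^ 2 - x ^ 2).

Lemma chord_nonneg L x : 0 <= chord L x.
Proof. apply sqrt_pos. Qed.

Lemma chord_sq L x : - L <= x <= L -> chord L x ^ 2 = L ^ 2 - x ^ 2.
Proof. intros H. unfold chord. rewrite pow2_sqrt; [ring|nra]. Qed.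

Lemma chord_le L x : 0 < L -> chord L x <= L.
Proof.
  intros HL. unfold chord. destruct (Rle_dec 0 (L ^ 2 - x ^ 2)).
  - apply Rle_trans with (sqrt (L ^ 2)); [apply sqrt_le_1_alt; nra|rewrite sqrt_pow2; lra].
  - rewrite sqrt_neg_0 by lra. lra.
Qed.

Lemma disk_iff_chord L x y : 0 < L ->
  x ^ 2 + y ^ 2 <= L ^ 2 <-> - L <= x <= L /\ - chord L x <= y <= chord L x.
Proof.
  intros HL. split.
  - intros H. assert (Hx : - L <= x <= L) by (split; nra).
    split; [exact Hx|]. pose proof (chord_sq L x Hx). pose proof (chord_nonneg L x).
    split; nra.
  - intros [Hx Hy]. pose proof (chord_sq L x Hx). pose proof (chord_nonneg L x). nra.
Qed.

Lemma chord_clamp_close L u x e : 0 < L -> 0 < e ->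
  Rabs (u - x) <= e ^ 2 / (8 * L) ->
  Rabs (chord L (clamp L u) - chord L (clamp L x)) <= e / 2.
Proof.
  intros HL He Hux.
  pose proof (clamp_bounds L u ltac:(lra)). pose proof (clamp_bounds L x ltac:(lra)).
  assert (Hc : Rabs (clamp L u - clamp L x) <= e ^ 2 / (8 * L)).
  { pose proof (clamp_lipschitz L L u x ltac:(lra) ltac:(lra)).
    rewrite Rminus_diag, Rabs_R0 in H1. lra. }
  eapply Rle_trans; [apply Rabs_sqrt_minus_le|].
  replace (e / 2) with (sqrt ((e / 2) ^ 2)) by (apply sqrt_pow2; lra).
  apply sqrt_le_1_alt.
  replace (L ^ 2 - clamp L u ^ 2 - (L ^ 2 - clamp L x ^ 2))
    with ((clamp L x - clamp L u) * (clamp L x + clamp L u)) by ring.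
  rewrite Rabs_mult, Rabs_minus_sym.
  assert (Rabs (clamp L x + clamp L u) <= 2 * L) by (apply Rabs_le; lra).
  apply Rle_trans with (e ^ 2 / (8 * L) * (2 * L)).
  - apply Rmult_le_compat; auto using Rabs_pos.
  - right. field. lra.
Qed.

Lemma within_disk_eps (L : R) (f : R -> R -> R) (x y : R) :
  filterlim (fun p : R * R => f (fst p) (snd p))
    (within (in_cdisk L) (locally (x, y))) (locally (f x y)) ->
  forall eps, 0 < eps -> exists d, 0 < d /\ forall u v, u ^ 2 + v ^ 2 <= L ^ 2 ->
    Rabs (u - x) < d -> Rabs (v - y) < d -> Rabs (f u v - f x y) < eps.
Proof.
  intros H eps Heps.
  assert (Hb : locally (f x y) (fun z => Rabs (z - f x y) < eps))
    by (exists (mkposreal _ Heps); intros z Hz; exact Hz).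
  destruct (H _ Hb) as [d Hd].
  exists d. split; [apply cond_pos|]. intros u v Huv Hu Hv.
  apply (Hd (u, v)); [split; assumption|exact Huv].
Qed.

(* [(x, y) |-> (clamp L x, clamp (chord L (clamp L x)) y)] is a continuous retraction
   of the plane onto the closed disk, which reduces the disk to a square. *)
Lemma continuous_disk_max (L : R) (f : R -> R -> R) : 0 < L ->
  (forall x y, x ^ 2 + y ^ 2 <= L ^ 2 ->
    filterlim (fun p : R * R => f (fst p) (snd p))
      (within (in_cdisk L) (locally (x, y))) (locally (f x y))) ->
  exists x y, x ^ 2 + y ^ 2 <= L ^ 2 /\
    forall u v, u ^ 2 + v ^ 2 <= L ^ 2 -> f u v <= f x y.
Proof.
  intros HL Hf.
  set (ry := fun x y => clamp (chord L (clamp L x)) y).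
  assert (Hin : forall x y, clamp L x ^ 2 + ry x y ^ 2 <= L ^ 2).
  { intros x y. apply disk_iff_chord; [exact HL|]. split.
    - apply clamp_bounds. lra.
    - apply clamp_bounds, chord_nonneg. }
  set (g := fun x y => f (clamp L x) (ry x y)).
  assert (Hg : forall x y, continuity_2d_pt g x y).
  { intros x y eps.
    destruct (within_disk_eps L f _ _ (Hf _ _ (Hin x y)) eps (cond_pos eps)) as [e [He H1]].
    set (d := Rmin (e / 2) (e ^ 2 / (8 * L))).
    assert (Hd : 0 < d) by (apply Rmin_glb_lt; [lra|apply Rdiv_lt_0_compat; nra]).
    assert (Hd1 : d <= e / 2) by apply Rmin_l.
    assert (Hd2 : d <= e ^ 2 / (8 * L)) by apply Rmin_r.
    exists (mkposreal _ Hd). intros u v Hu Hv; simpl in Hu, Hv.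
    apply H1; [apply Hin| |].
    - pose proof (clamp_lipschitz L L u x ltac:(lra) ltac:(lra)).
      rewrite Rminus_diag, Rabs_R0 in H. lra.
    - pose proof (chord_clamp_close L u x e HL He ltac:(lra)).
      eapply Rle_lt_trans; [apply clamp_lipschitz; apply chord_nonneg|]. lra. }
  destruct (continuous_square_max g L ltac:(lra) Hg) as [xM [yM [HxM [HyM Hmax]]]].
  exists (clamp L xM), (ry xM yM). split; [apply Hin|].
  intros u v Huv. apply disk_iff_chord in Huv as [Hu Hv]; [|exact HL].
  assert (Hr : clamp L u = u /\ ry u v = v).
  { split; [apply clamp_id; exact Hu|]. unfold ry. rewrite (clamp_id L u) by exact Hu.
    apply clamp_id. exact Hv. }
  pose proof (chord_le L u HL).
  specialize (Hmax u v Hu ltac:(lra)). unfold g in Hmax.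
  destruct Hr as [E1 E2]. rewrite E1, E2 in Hmax. exact Hmax.
Qed.

Lemma continuous_disk_max_interior (L : R) (f : R -> R -> R) x0 y0 : 0 < L ->
  (forall x y, x ^ 2 + y ^ 2 <= L ^ 2 ->
    filterlim (fun p : R * R => f (fst p) (snd p))
      (within (in_cdisk L) (locally (x, y))) (locally (f x y))) ->
  (forall x y, x ^ 2 + y ^ 2 = L ^ 2 -> f x y = 0) ->
  x0 ^ 2 + y0 ^ 2 <= L ^ 2 -> 0 < f x0 y0 ->
  exists x y, x ^ 2 + y ^ 2 < L ^ 2 /\
    forall u v, u ^ 2 + v ^ 2 <= L ^ 2 -> f u v <= f x y.
Proof.
  intros HL Hf Hb H0 Hpos.
  destruct (continuous_disk_max L f HL Hf) as [x [y [Hxy Hmax]]].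
  exists x, y. split; [|exact Hmax].
  destruct (Rle_lt_or_eq_dec _ _ Hxy) as [Hin|Hbd]; [exact Hin|].
  specialize (Hmax x0 y0 H0). rewrite (Hb x y Hbd) in Hmax. lra.
Qed.

Lemma open_disk_locally x y L : x ^ 2 + y ^ 2 < L ^ 2 ->
  locally x (fun t => t ^ 2 + y ^ 2 < L ^ 2).
Proof.
  intros H.
  assert (Hc : filterlim (fun t => t ^ 2 + y ^ 2) (locally x) (locally (x ^ 2 + y ^ 2))).
  { apply (continuity_pt_filterlim (fun t => t ^ 2 + y ^ 2)), derivable_continuous_pt.
    apply derivable_pt_plus; [apply derivable_pt_pow|apply derivable_pt_const]. }
  exact (Hc (fun z => z < L ^ 2) (open_lt _ _ H)).
Qed.

Lemma open_disk_locally_snd x y L : x ^ 2 + y ^ 2 < L ^ 2 ->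
  locally y (fun t => x ^ 2 + t ^ 2 < L ^ 2).
Proof.
  intros H. apply (filter_imp (fun t => t ^ 2 + x ^ 2 < L ^ 2)); [intros; lra|].
  apply open_disk_locally. lra.
Qed.

Lemma is_derive_pos_gt_right (g : R -> R) x l : is_derive g x l -> 0 < l ->
  exists eta, 0 < eta /\ forall t, x < t < x + eta -> g x < g t.
Proof.
  intros H Hl. apply is_derive_Reals in H.
  destruct (H (l / 2) ltac:(lra)) as [d Hd].
  exists d. split; [apply cond_pos|]. intros t Ht.
  specialize (Hd (t - x) ltac:(lra) ltac:(rewrite Rabs_pos_eq; lra)).
  replace (x + (t - x)) with t in Hd by ring.
  apply Rabs_def2 in Hd as [_ Hd].
  assert (0 < (g t - g x) / (t - x) * (t - x)) by (apply Rmult_lt_0_compat; lra).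
  field_simplify in H0; lra.
Qed.

Lemma Derive_local_max (g : R -> R) x d : 0 < d ->
  (forall t, Rabs (t - x) < d -> g t <= g x) -> ex_derive g x -> Derive g x = 0.
Proof.
  intros Hd Hmax Hg. pose (pr := ex_derive_Reals_0 g x Hg).
  rewrite <- (Derive_Reals g x pr).
  apply (deriv_maximum g (x - d) (x + d) x pr); try lra.
  intros t H1 H2. apply Hmax, Rabs_def1; lra.
Qed.

(* At a local maximum of [g] the flux [G g'] goes from [0] to nonpositive values
   to the right, since [g] cannot increase there. *)
Lemma Derive_flux_local_max (g G : R -> R) x d D : 0 < d ->
  (forall t, Rabs (t - x) < d -> g t <= g x) ->
  (forall t, Rabs (t - x) < d -> ex_derive g t) ->
  (forall t, Rabs (t - x) < d -> 0 < G t) ->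
  is_derive (fun t => G t * Derive g t) x D -> D <= 0.
Proof.
  intros Hd Hmax Hder HG HD.
  assert (H0 : Derive g x = 0).
  { apply (Derive_local_max g x d Hd Hmax), Hder. rewrite Rminus_diag, Rabs_R0; lra. }
  destruct (Rle_dec D 0) as [|Hn]; auto. exfalso.
  destruct (is_derive_pos_gt_right _ x D HD ltac:(lra)) as [e [He He']].
  rewrite H0, Rmult_0_r in He'.
  set (e' := Rmin e d).
  assert (0 < e') by (apply Rmin_glb_lt; lra).
  assert (e' <= e) by apply Rmin_l. assert (e' <= d) by apply Rmin_r.
  assert (Hpos : forall t, x < t < x + e' -> 0 < Derive g t).
  { intros t Ht. specialize (He' t ltac:(lra)).
    assert (0 < G t) by (apply HG; rewrite Rabs_pos_eq; lra). nra. }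
  set (t1 := x + e' / 2).
  destruct (MVT_cor2 g (Derive g) x t1 ltac:(unfold t1; lra)) as [c [Hc1 Hc2]].
  { intros c Hc. apply is_derive_Reals, Derive_correct, Hder.
    unfold t1 in Hc. rewrite Rabs_pos_eq; lra. }
  assert (g t1 <= g x) by (apply Hmax; unfold t1; rewrite Rabs_pos_eq; lra).
  specialize (Hpos c ltac:(unfold t1 in Hc2; lra)).
  assert (0 < Derive g c * (t1 - x)) by (apply Rmult_lt_0_compat; unfold t1; lra).
  lra.
Qed.

(* The barrier [z] is chosen with [G z' = id], so the perturbed flux has slope [D + eps]. *)
Lemma flux_slope_at_perturbed_max (u z G : R -> R) x d D eps : 0 < d ->
  (forall t, Rabs (t - x) < d -> u t + eps * z t <= u x + eps * z x) ->
  (forall t, Rabs (t - x) < d -> ex_derive u t /\ is_derive z t (t / G t) /\ 0 < G t) ->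
  is_derive (fun t => G t * Derive u t) x D -> D + eps <= 0.
Proof.
  intros Hd Hmax Hloc HD.
  apply (Derive_flux_local_max (fun t => u t + eps * z t) G x d); auto.
  - intros t Ht. destruct (Hloc t Ht) as [Hu [Hz _]].
    apply (ex_derive_plus (K:=R_AbsRing) (V:=R_NormedModule)); [exact Hu|].
    apply ex_derive_scal. eexists. exact Hz.
  - intros t Ht. apply Hloc, Ht.
  - apply (is_derive_ext_loc (fun t => G t * Derive u t + eps * t)).
    + exists (mkposreal d Hd). intros t Ht. change (Rabs (t - x) < d) in Ht.
      destruct (Hloc t Ht) as [Hu [Hz HG]].
      assert (Hez : ex_derive (fun s => eps * z s) t) by (apply ex_derive_scal; eexists; exact Hz).
      rewrite Derive_plus, Derive_scal, (is_derive_unique z t _ Hz) by assumption.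
      simpl. field. lra.
    + apply is_derive_plus_R; [exact HD|].
      replace eps with (eps * 1) at 2 by ring. apply is_derive_scal, (is_derive_id (K:=R_AbsRing)).
Qed.

(** * The radial solution *)

Definition cap_height (r s : R) : R := r - sqrt (r ^ 2 - s).

(* The gap [gamma] as a function of [q = x^2 + y^2]; [Rabs q] makes it continuous
   and at least [h] on all of [R]. *)
Definition gap (Rad Srad h q : R) : R := h + cap_height Srad (Rabs q) + cap_height Rad (Rabs q).

Lemma gamma_gap Rad Srad h x y : gamma Rad Srad h x y = gap Rad Srad h (x ^ 2 + y ^ 2).
Proof.
  unfold gamma, gamma_t, gamma_b, gap, cap_height.
  rewrite Rabs_pos_eq by nra.
  replace (Srad ^ 2 - x ^ 2 - y ^ 2) with (Srad ^ 2 - (x ^ 2 + y ^ 2)) by ring.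
  replace (Rad ^ 2 - x ^ 2 - y ^ 2) with (Rad ^ 2 - (x ^ 2 + y ^ 2)) by ring.
  ring.
Qed.

Lemma cap_height_nonneg r s : 0 < r -> 0 <= s -> 0 <= cap_height r s.
Proof.
  intros Hr Hs. unfold cap_height.
  destruct (Rle_dec 0 (r ^ 2 - s)).
  - assert (sqrt (r ^ 2 - s) <= sqrt (r ^ 2)) by (apply sqrt_le_1_alt; lra).
    rewrite sqrt_pow2 in H by lra. lra.
  - rewrite sqrt_neg_0 by lra. lra.
Qed.

Lemma continuity_pt_cap_height r u : continuity_pt (fun u => cap_height r (Rabs u)) u.
Proof.
  apply continuity_pt_minus; [apply continuity_pt_cst|].
  apply (continuity_pt_comp (fun u => r ^ 2 - Rabs u) sqrt).
  - apply continuity_pt_minus; [apply continuity_pt_cst|apply Rcontinuity_abs].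
  - apply continuity_pt_filterlim, continuous_sqrt.
Qed.

Section RadialSolution.
Variables (Rad Srad h L : R).
Hypotheses (HR : 0 < Rad) (HS : 0 < Srad) (Hh : 0 < h).

Lemma gap_ge_h u : h <= gap Rad Srad h u.
Proof.
  unfold gap.
  pose proof (cap_height_nonneg Srad (Rabs u) HS (Rabs_pos u)).
  pose proof (cap_height_nonneg Rad (Rabs u) HR (Rabs_pos u)). lra.
Qed.

Lemma gap_pos u : 0 < gap Rad Srad h u.
Proof. pose proof (gap_ge_h u). lra. Qed.

Lemma gamma_pos x y : 0 < gamma Rad Srad h x y.
Proof. rewrite gamma_gap. apply gap_pos. Qed.

Lemma continuity_pt_gap u : continuity_pt (gap Rad Srad h) u.
Proof.
  apply continuity_pt_plus; [apply continuity_pt_plus|];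
    auto using continuity_pt_cst, continuity_pt_cap_height.
Qed.

Lemma continuity_pt_div_gap_cube (f : R -> R) u : continuity_pt f u ->
  continuity_pt (fun u => f u / gap Rad Srad h u ^ 3) u.
Proof.
  intros Hf. apply continuity_pt_div; [exact Hf| |apply pow_nonzero, Rgt_not_eq, gap_pos].
  apply (continuity_pt_comp (gap Rad Srad h) (fun x => x ^ 3)); [apply continuity_pt_gap|].
  apply derivable_continuous_pt, derivable_pt_pow.
Qed.

Definition radial_profile (c q : R) : R :=
  RInt (fun u => c / gap Rad Srad h u ^ 3) (L ^ 2) q.

Definition radial_solution (c x y : R) : R := radial_profile c (x ^ 2 + y ^ 2).

Lemma radial_profile_derive c q : is_derive (radial_profile c) q (c / gap Rad Srad h q ^ 3).
Proof.
  apply (is_derive_RInt_R (fun u => c / gap Rad Srad h u ^ 3)). intros z.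
  apply continuity_pt_div_gap_cube, continuity_pt_cst.
Qed.

Lemma radial_solution_derive_fst c x y :
  is_derive (fun t => radial_solution c t y) x (2 * c * x / gamma Rad Srad h x y ^ 3).
Proof.
  rewrite gamma_gap.
  replace (2 * c * x / gap Rad Srad h (x ^ 2 + y ^ 2) ^ 3)
    with (2 * x * (c / gap Rad Srad h (x ^ 2 + y ^ 2) ^ 3)) by (unfold Rdiv; ring).
  apply (is_derive_comp (radial_profile c) (fun t => t ^ 2 + y ^ 2)).
  - apply radial_profile_derive.
  - auto_derive; [auto|ring].
Qed.

Lemma radial_solution_derive_snd c x y :
  is_derive (fun t => radial_solution c x t) y (2 * c * y / gamma Rad Srad h x y ^ 3).
Proof.
  rewrite gamma_gap.
  replace (2 * c * y / gap Rad Srad h (x ^ 2 + y ^ 2) ^ 3)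
    with (2 * y * (c / gap Rad Srad h (x ^ 2 + y ^ 2) ^ 3)) by (unfold Rdiv; ring).
  apply (is_derive_comp (radial_profile c) (fun t => x ^ 2 + t ^ 2)).
  - apply radial_profile_derive.
  - auto_derive; [auto|ring].
Qed.

Lemma dx_radial_solution c x y :
  dx (radial_solution c) x y = 2 * c * x / gamma Rad Srad h x y ^ 3.
Proof. apply is_derive_unique, radial_solution_derive_fst. Qed.

Lemma dy_radial_solution c x y :
  dy (radial_solution c) x y = 2 * c * y / gamma Rad Srad h x y ^ 3.
Proof. apply is_derive_unique, radial_solution_derive_snd. Qed.

Lemma radial_solution_flux_fst c x y :
  is_derive (fun t => gamma Rad Srad h t y ^ 3 * dx (radial_solution c) t y) x (2 * c).
Proof.
  apply (is_derive_ext (fun t => 2 * c * t)); [|auto_derive; [auto|ring]].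
  intros t. rewrite dx_radial_solution. pose proof (gamma_pos t y). simpl. field. lra.
Qed.

Lemma radial_solution_flux_snd c x y :
  is_derive (fun t => gamma Rad Srad h x t ^ 3 * dy (radial_solution c) x t) y (2 * c).
Proof.
  apply (is_derive_ext (fun t => 2 * c * t)); [|auto_derive; [auto|ring]].
  intros t. rewrite dy_radial_solution. pose proof (gamma_pos x t). simpl. field. lra.
Qed.

Lemma radial_solution_continuous c x y :
  filterlim (fun p : R * R => radial_solution c (fst p) (snd p)) (locally (x, y))
    (locally (radial_solution c x y)).
Proof.
  apply (continuity_2d_pt_filterlim (radial_solution c)).
  apply (continuity_1d_2d_pt_comp (radial_profile c) (fun u v => u ^ 2 + v ^ 2)).
  - apply continuity_pt_of_ex_derive. eexists. apply radial_profile_derive.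
  - apply continuity_2d_pt_plus; simpl; repeat apply continuity_2d_pt_mult;
      auto using continuity_2d_pt_id1, continuity_2d_pt_id2, continuity_2d_pt_const.
Qed.

Lemma radial_solution_boundary c x y : x ^ 2 + y ^ 2 = L ^ 2 -> radial_solution c x y = 0.
Proof. intros H. unfold radial_solution, radial_profile. rewrite H, RInt_point. reflexivity. Qed.

Lemma radial_solution_is_solution f0 :
  is_solution (gamma Rad Srad h) L f0 (radial_solution (-3 * f0)).
Proof.
  split; [|split].
  - intros x y _. eapply filterlim_filter_le_1; [apply filter_le_within|].
    apply radial_solution_continuous.
  - apply radial_solution_boundary.
  - intros x y _. repeat split.
    + eexists. apply radial_solution_derive_fst.
    + eexists. apply radial_solution_derive_snd.
    + eexists. apply radial_solution_flux_fst.
    + eexists. apply radial_solution_flux_snd.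
    + rewrite (is_derive_unique _ _ _ (radial_solution_flux_fst _ x y)),
        (is_derive_unique _ _ _ (radial_solution_flux_snd _ x y)). field.
Qed.

End RadialSolution.

(** * Maximum principle and uniqueness *)

Lemma is_solution_minus g L f1 f2 w1 w2 :
  is_solution g L f1 w1 -> is_solution g L f2 w2 ->
  is_solution g L (f1 - f2) (fun x y => w1 x y - w2 x y).
Proof.
  intros [C1 [B1 D1]] [C2 [B2 D2]]. split; [|split].
  - intros x y Hxy. apply (filterlim_minus_R _ (FF := within_filter _ _ _ _)); auto.
  - intros x y Hxy. rewrite B1, B2 by exact Hxy. ring.
  - intros x y Hxy.
    destruct (D1 x y Hxy) as [a1 [b1 [c1 [d1 e1]]]].
    destruct (D2 x y Hxy) as [a2 [b2 [c2 [d2 e2]]]].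
    assert (Hx : is_derive (fun t : R => g t y ^ 3 * dx (fun x y => w1 x y - w2 x y) t y) x
      (Derive (fun t => g t y ^ 3 * dx w1 t y) x - Derive (fun t => g t y ^ 3 * dx w2 t y) x)).
    { apply (is_derive_ext_loc (fun t => g t y ^ 3 * dx w1 t y - g t y ^ 3 * dx w2 t y)).
      - eapply filter_imp; [|exact (open_disk_locally x y L Hxy)]. intros t Ht. cbv beta.
        destruct (D1 t y Ht) as [Ha1 _]. destruct (D2 t y Ht) as [Ha2 _].
        unfold dx at 3. rewrite Derive_minus by assumption. symmetry; apply Rmult_minus_distr_l.
      - apply (is_derive_minus (K:=R_AbsRing) (V:=R_NormedModule)); apply Derive_correct; auto. }
    assert (Hy : is_derive (fun t : R => g x t ^ 3 * dy (fun x y => w1 x y - w2 x y) x t) y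
      (Derive (fun t => g x t ^ 3 * dy w1 x t) y - Derive (fun t => g x t ^ 3 * dy w2 x t) y)).
    { apply (is_derive_ext_loc (fun t => g x t ^ 3 * dy w1 x t - g x t ^ 3 * dy w2 x t)).
      - eapply filter_imp; [|exact (open_disk_locally_snd x y L Hxy)]. intros t Ht. cbv beta.
        destruct (D1 x t Ht) as [_ [Hb1 _]]. destruct (D2 x t Ht) as [_ [Hb2 _]].
        unfold dy at 3. rewrite Derive_minus by assumption. symmetry; apply Rmult_minus_distr_l.
      - apply (is_derive_minus (K:=R_AbsRing) (V:=R_NormedModule)); apply Derive_correct; auto. }
    repeat split.
    + apply (ex_derive_minus (K:=R_AbsRing) (V:=R_NormedModule)); auto.
    + apply (ex_derive_minus (K:=R_AbsRing) (V:=R_NormedModule)); auto.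
    + eexists. exact Hx.
    + eexists. exact Hy.
    + rewrite (is_derive_unique _ _ _ Hx), (is_derive_unique _ _ _ Hy). lra.
Qed.

Section MaximumPrinciple.
Variables (Rad Srad h L : R).
Hypotheses (HR : 0 < Rad) (HS : 0 < Srad) (Hh : 0 < h) (HL : 0 < L).

Lemma flux_fst_slope_at_perturbed_max (v : R -> R -> R) eps xs ys d : 0 < d ->
  (forall t, Rabs (t - xs) < d ->
     v t ys + eps * radial_solution Rad Srad h L (1 / 2) t ys
     <= v xs ys + eps * radial_solution Rad Srad h L (1 / 2) xs ys) ->
  (forall t, Rabs (t - xs) < d -> ex_derive (fun s => v s ys) t) ->
  ex_derive (fun t => gamma Rad Srad h t ys ^ 3 * dx v t ys) xs ->
  Derive (fun t => gamma Rad Srad h t ys ^ 3 * dx v t ys) xs + eps <= 0.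
Proof.
  intros Hd Hmax Hv Hf.
  apply (flux_slope_at_perturbed_max (fun t => v t ys)
    (fun t => radial_solution Rad Srad h L (1 / 2) t ys) (fun t => gamma Rad Srad h t ys ^ 3) xs d);
    auto; [|apply Derive_correct, Hf].
  intros t Ht. pose proof (gamma_pos Rad Srad h HR HS Hh t ys) as Hg. split; [|split]; auto.
  - replace (t / gamma Rad Srad h t ys ^ 3)
      with (2 * (1 / 2) * t / gamma Rad Srad h t ys ^ 3) by (field; lra).
    apply radial_solution_derive_fst; assumption.
  - apply pow_lt, Hg.
Qed.

Lemma flux_snd_slope_at_perturbed_max (v : R -> R -> R) eps xs ys d : 0 < d ->
  (forall t, Rabs (t - ys) < d ->
     v xs t + eps * radial_solution Rad Srad h L (1 / 2) xs t
     <= v xs ys + eps * radial_solution Rad Srad h L (1 / 2) xs ys) ->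
  (forall t, Rabs (t - ys) < d -> ex_derive (fun s => v xs s) t) ->
  ex_derive (fun t => gamma Rad Srad h xs t ^ 3 * dy v xs t) ys ->
  Derive (fun t => gamma Rad Srad h xs t ^ 3 * dy v xs t) ys + eps <= 0.
Proof.
  intros Hd Hmax Hv Hf.
  apply (flux_slope_at_perturbed_max (fun t => v xs t)
    (fun t => radial_solution Rad Srad h L (1 / 2) xs t) (fun t => gamma Rad Srad h xs t ^ 3) ys d);
    auto; [|apply Derive_correct, Hf].
  intros t Ht. pose proof (gamma_pos Rad Srad h HR HS Hh xs t) as Hg. split; [|split]; auto.
  - replace (t / gamma Rad Srad h xs t ^ 3)
      with (2 * (1 / 2) * t / gamma Rad Srad h xs t ^ 3) by (field; lra).
    apply radial_solution_derive_snd; assumption.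
  - apply pow_lt, Hg.
Qed.

(* If [v] had a positive interior value, [v + eps Z] with the radial barrier
   [Z = radial_solution (1/2)] would still have a positive, hence interior, maximum;
   there each directional flux slope is [<= - eps], contradicting [div >= 0]. *)
Lemma is_solution_le_0 f0 v : f0 <= 0 ->
  is_solution (gamma Rad Srad h) L f0 v ->
  forall x y, x ^ 2 + y ^ 2 < L ^ 2 -> v x y <= 0.
Proof.
  intros Hf0 [Hc [Hb Hp]] x0 y0 H0.
  destruct (Rle_dec (v x0 y0) 0) as [|Hn]; auto. exfalso.
  set (Z := radial_solution Rad Srad h L (1 / 2)).
  set (eps := v x0 y0 / (2 * (Rabs (Z x0 y0) + 1))).
  assert (Heps : 0 < eps).
  { unfold eps. apply Rdiv_lt_0_compat; [lra|pose proof (Rabs_pos (Z x0 y0)); lra]. }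
  set (ve := fun u w => v u w - (- eps) * Z u w).
  assert (Hv0 : 0 < ve x0 y0).
  { assert (eps * Rabs (Z x0 y0) < v x0 y0).
    { apply Rle_lt_trans with (eps * (Rabs (Z x0 y0) + 1)); [nra|].
      unfold eps. replace (v x0 y0 / (2 * (Rabs (Z x0 y0) + 1)) * (Rabs (Z x0 y0) + 1))
        with (v x0 y0 / 2) by (field; pose proof (Rabs_pos (Z x0 y0)); lra). lra. }
    pose proof (Rle_abs (- Z x0 y0)). rewrite Rabs_Ropp in H1. unfold ve. nra. }
  assert (Hvec : forall x y, x ^ 2 + y ^ 2 <= L ^ 2 ->
    filterlim (fun p : R * R => ve (fst p) (snd p)) (within (in_cdisk L) (locally (x, y)))
      (locally (ve x y))).
  { intros x y Hxy. apply (filterlim_minus_R _ (FF := within_filter _ _ _ _)); [apply Hc, Hxy|].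
    eapply filterlim_filter_le_1; [apply filter_le_within|].
    apply (continuity_2d_pt_filterlim (fun u w => - eps * Z u w)).
    apply continuity_2d_pt_mult; [apply continuity_2d_pt_const|].
    apply continuity_2d_pt_filterlim, radial_solution_continuous; assumption. }
  assert (Hvb : forall x y, x ^ 2 + y ^ 2 = L ^ 2 -> ve x y = 0).
  { intros x y Hxy. unfold ve, Z. rewrite Hb, radial_solution_boundary by exact Hxy. ring. }
  destruct (continuous_disk_max_interior L ve x0 y0 HL Hvec Hvb ltac:(lra) Hv0)
    as [xs [ys [Hin Hmax]]].
  destruct (Hp xs ys Hin) as [_ [_ [Hfx [Hfy Hsum]]]].
  destruct (open_disk_locally xs ys L Hin) as [d1 Hn1].
  destruct (open_disk_locally_snd xs ys L Hin) as [d2 Hn2].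
  pose proof (flux_fst_slope_at_perturbed_max v eps xs ys d1 (cond_pos d1)) as HDx.
  pose proof (flux_snd_slope_at_perturbed_max v eps xs ys d2 (cond_pos d2)) as HDy.
  assert (Derive (fun t => gamma Rad Srad h t ys ^ 3 * dx v t ys) xs + eps <= 0).
  { apply HDx; [|intros t Ht; apply (Hp t ys (Hn1 t Ht))|exact Hfx].
    intros t Ht. specialize (Hmax t ys (Rlt_le _ _ (Hn1 t Ht))). unfold ve, Z in Hmax. lra. }
  assert (Derive (fun t => gamma Rad Srad h xs t ^ 3 * dy v xs t) ys + eps <= 0).
  { apply HDy; [|intros t Ht; apply (Hp xs t (Hn2 t Ht))|exact Hfy].
    intros t Ht. specialize (Hmax xs t (Rlt_le _ _ (Hn2 t Ht))). unfold ve, Z in Hmax. lra. }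
  lra.
Qed.

Lemma is_solution_radial f0 w : is_solution (gamma Rad Srad h) L f0 w ->
  forall x y, x ^ 2 + y ^ 2 < L ^ 2 -> w x y = radial_solution Rad Srad h L (-3 * f0) x y.
Proof.
  intros Hw x y Hxy.
  pose proof (radial_solution_is_solution Rad Srad h L HR HS Hh f0) as HW.
  pose proof (is_solution_minus _ _ _ _ _ _ Hw HW) as H1.
  pose proof (is_solution_minus _ _ _ _ _ _ HW Hw) as H2.
  rewrite Rminus_diag in H1, H2.
  pose proof (is_solution_le_0 0 _ (Rle_refl 0) H1 x y Hxy).
  pose proof (is_solution_le_0 0 _ (Rle_refl 0) H2 x y Hxy). lra.
Qed.

End MaximumPrinciple.

(** * Integrating a radial function over the disk *)

Lemma RInt_even (g : R -> R) L : (forall x, g (- x) = g x) -> (forall z, continuity_pt g z) ->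
  RInt g (- L) 0 = RInt g 0 L.
Proof.
  intros He Hc.
  assert (Hex : ex_RInt g ((-1) * 0 + 0) ((-1) * L + 0)) by (apply ex_RInt_continuous_R, Hc).
  pose proof (RInt_comp_lin (V:=R_CompleteNormedModule) g (-1) 0 0 L Hex) as E.
  replace (-1 * 0 + 0) with 0 in E by ring. replace (-1 * L + 0) with (- L) in E by ring.
  rewrite <- (opp_RInt_swap_R g 0 (- L)), <- E by (apply ex_RInt_continuous_R, Hc).
  transitivity (- RInt (fun y => -1 * g y) 0 L).
  { f_equal. apply RInt_ext. intros y _. unfold scal; simpl; unfold mult; simpl.
    replace (-1 * y + 0) with (- y) by ring. rewrite He. ring. }
  rewrite RInt_scal_R by (apply ex_RInt_continuous_R, Hc).
  change (@eq R (- (-1 * RInt g 0 L)) (RInt g 0 L)). ring.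
Qed.

Lemma continuity_pt_chord L x : continuity_pt (chord L) x.
Proof.
  apply (continuity_pt_comp (fun x => L ^ 2 - x ^ 2) sqrt).
  - apply derivable_continuous_pt, derivable_pt_minus;
      [apply derivable_pt_const|apply derivable_pt_pow].
  - apply continuity_pt_filterlim, continuous_sqrt.
Qed.

Lemma RInt_chord L : 0 < L -> RInt (fun x => chord L x * 2) (- L) L = PI * L ^ 2.
Proof.
  intros HL. pose proof PI_RGT_0.
  pose proof (RInt_comp (V:=R_CompleteNormedModule) (fun x => chord L x * 2)
    (fun t => L * sin t) (fun t => L * cos t) (- (PI / 2)) (PI / 2)) as E.
  cbv beta in E.
  replace (L * sin (- (PI / 2))) with (- L) in E by (rewrite sin_neg, sin_PI2; ring).
  replace (L * sin (PI / 2)) with L in E by (rewrite sin_PI2; ring).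
  rewrite <- E.
  - transitivity (RInt (fun t => L ^ 2 * (1 + cos (2 * t))) (- (PI / 2)) (PI / 2)).
    + apply RInt_ext. intros t Ht. rewrite Rmin_left, Rmax_right in Ht by lra.
      pose proof (cos_gt_0 t ltac:(lra) ltac:(lra)) as Hcos.
      unfold scal; simpl; unfold mult; simpl. unfold chord.
      replace (L ^ 2 - (L * sin t) ^ 2) with ((L * cos t) ^ 2)
        by (pose proof (sin2_cos2 t); unfold Rsqr in *; nra).
      rewrite sqrt_pow2, cos_2a_cos by nra. ring.
    + set (F := fun t => L ^ 2 * (t + sin (2 * t) / 2)).
      rewrite (is_RInt_unique _ _ _ (minus (F (PI / 2)) (F (- (PI / 2))))).
      * unfold minus, plus, opp, F; simpl.
        replace (2 * (PI / 2)) with PI by field. replace (2 * - (PI / 2)) with (- PI) by field.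
        rewrite sin_neg, sin_PI. field.
      * apply (is_RInt_derive (V:=R_CompleteNormedModule) F).
        -- intros x _. unfold F. auto_derive; [auto|field].
        -- intros x _. apply continuity_pt_filterlim, derivable_continuous_pt.
           apply derivable_pt_mult; [apply derivable_pt_const|].
           apply derivable_pt_plus; [apply derivable_pt_const|].
           apply (derivable_pt_comp (fun t => 2 * t) cos); [|apply derivable_pt_cos].
           apply derivable_pt_mult; [apply derivable_pt_const|apply derivable_pt_id].
  - intros x _. apply continuity_pt_filterlim, continuity_pt_mult;
      [apply continuity_pt_chord|apply continuity_pt_cst].
  - intros x _. split; [auto_derive; [auto|ring]|].
    apply continuity_pt_filterlim, derivable_continuous_pt.
    apply derivable_pt_mult; [apply derivable_pt_const|apply derivable_pt_cos].
Qed.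

Lemma vanishing_bound_eps (F bnd : R -> R) a b x0 :
  F x0 = 0 -> bnd x0 = 0 -> continuity_pt bnd x0 ->
  (forall y, a <= y <= b -> Rabs (F y) <= bnd y) ->
  forall eps, 0 < eps -> exists d, 0 < d /\
    forall y, a <= y <= b -> Rabs (y - x0) < d -> Rabs (F y - F x0) < eps.
Proof.
  intros HF Hb Hc Hdom eps Heps.
  destruct (Hc eps Heps) as [d [Hd H]]. exists d. split; [exact Hd|].
  intros y Hy Hyd. rewrite HF, Rminus_0_r.
  destruct (Req_dec x0 y) as [<-|Hne]; [rewrite HF, Rabs_R0; exact Heps|].
  specialize (H y (conj (conj I Hne) Hyd)). simpl in H. unfold R_dist in H.
  rewrite Hb, Rminus_0_r in H. pose proof (Hdom y Hy). pose proof (Rle_abs (bnd y)). lra.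
Qed.

(* [x ^ 2 + (t * chord L x) ^ 2] for [-L <= x <= L], written without the square root. *)
Definition chord_point_sq (L x t : R) : R := x ^ 2 * (1 - t ^ 2) + L ^ 2 * t ^ 2.

Lemma chord_point_sq_opp L x t : chord_point_sq L (- x) t = chord_point_sq L x t.
Proof. unfold chord_point_sq. ring. Qed.

Lemma chord_point_sq_pos L x t : 0 < L -> x <> 0 -> -1 <= t <= 1 -> 0 < chord_point_sq L x t.
Proof.
  intros HL Hx Ht. unfold chord_point_sq.
  assert (0 < x ^ 2) by (apply pow2_gt_0, Hx).
  assert (0 <= L ^ 2 * t ^ 2) by (apply Rmult_le_pos; apply pow2_ge_0).
  assert (0 <= 1 - t ^ 2) by nra.
  destruct (Req_dec (t ^ 2) 1) as [E|E]; [rewrite E; nra|].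
  assert (0 < 1 - t ^ 2) by (assert (t ^ 2 <= 1) by nra; lra). nra.
Qed.

Lemma chord_point_sq_pos_in L x t : 0 < x <= L -> 0 < chord_point_sq L x t.
Proof.
  intros Hx. unfold chord_point_sq.
  replace (x ^ 2 * (1 - t ^ 2) + L ^ 2 * t ^ 2) with (x ^ 2 + (L ^ 2 - x ^ 2) * t ^ 2) by ring.
  assert (0 <= L ^ 2 - x ^ 2) by nra. assert (0 <= t ^ 2) by nra. nra.
Qed.

Lemma chord_point_sq_le L x t : 0 <= x <= L -> -1 <= t <= 1 -> chord_point_sq L x t <= L ^ 2.
Proof.
  intros Hx Ht. unfold chord_point_sq.
  assert (x ^ 2 <= L ^ 2) by nra. assert (0 <= 1 - t ^ 2) by nra. nra.
Qed.

Lemma continuity_2d_pt_chord_point_sq L x t : continuity_2d_pt (chord_point_sq L) x t.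
Proof.
  unfold chord_point_sq. apply continuity_2d_pt_plus; apply continuity_2d_pt_mult; simpl;
    repeat first [apply continuity_2d_pt_mult | apply continuity_2d_pt_minus
                 | apply continuity_2d_pt_id1 | apply continuity_2d_pt_id2
                 | apply continuity_2d_pt_const].
Qed.

Lemma continuity_pt_chord_point_sq L x t : continuity_pt (chord_point_sq L x) t.
Proof.
  unfold chord_point_sq. apply derivable_continuous_pt.
  apply derivable_pt_plus; apply derivable_pt_mult;
    repeat first [apply derivable_pt_minus | apply derivable_pt_const | apply derivable_pt_pow].
Qed.

Lemma ex_RInt_chord_point (g : R -> R) L x : x <> 0 -> 0 < L ->
  (forall q, 0 < q -> continuity_pt g q) ->
  ex_RInt (fun t => g (chord_point_sq L x t)) (-1) 1.
Proof.
  intros Hx HL Hg. apply ex_RInt_continuous_le; [lra|]. intros t Ht.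
  apply (continuity_pt_comp (chord_point_sq L x) g);
    [apply continuity_pt_chord_point_sq|apply Hg, chord_point_sq_pos; assumption].
Qed.

Definition chord_mean (L : R) (k : R -> R) (x : R) : R :=
  RInt (fun t => k (chord_point_sq L x t)) (-1) 1.

Section RadialIntegration.
Variables (L : R) (k : R -> R).
Hypotheses (HL : 0 < L) (Hk : forall q, continuity_pt k q).

Lemma ex_RInt_k_chord_point x : ex_RInt (fun t => k (chord_point_sq L x t)) (-1) 1.
Proof.
  apply ex_RInt_continuous_R. intros t.
  apply (continuity_pt_comp (chord_point_sq L x) k);
    [apply continuity_pt_chord_point_sq|apply Hk].
Qed.

Lemma continuity_pt_chord_mean x : continuity_pt (chord_mean L k) x.
Proof.
  apply (RInt_continuous_param (fun x t => k (chord_point_sq L x t))); [lra| |].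
  - intros t _. apply continuity_1d_2d_pt_comp;
      [apply Hk|apply continuity_2d_pt_chord_point_sq].
  - exists 1. split; [lra|]. intros v _. apply ex_RInt_k_chord_point.
Qed.

Lemma RInt_chord_section x : -L <= x <= L ->
  RInt (fun y => k (x ^ 2 + y ^ 2)) (- chord L x) (chord L x) = chord L x * chord_mean L k x.
Proof.
  intros Hx.
  assert (Hex : ex_RInt (fun y => k (x ^ 2 + y ^ 2)) (chord L x * (-1) + 0) (chord L x * 1 + 0)).
  { apply ex_RInt_continuous_R. intros z.
    apply (continuity_pt_comp (fun y => x ^ 2 + y ^ 2) k); [|apply Hk].
    apply derivable_continuous_pt, derivable_pt_plus;
      [apply derivable_pt_const|apply derivable_pt_pow]. }
  pose proof (RInt_comp_lin (V:=R_CompleteNormedModule)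
    (fun y => k (x ^ 2 + y ^ 2)) (chord L x) 0 (-1) 1 Hex) as E.
  replace (chord L x * -1 + 0) with (- chord L x) in E by ring.
  replace (chord L x * 1 + 0) with (chord L x) in E by ring.
  rewrite <- E. unfold chord_mean. rewrite <- RInt_scal_R by apply ex_RInt_k_chord_point.
  apply RInt_ext. intros t _. unfold scal; simpl; unfold mult; simpl. do 2 f_equal.
  unfold chord_point_sq. transitivity (x ^ 2 + chord L x ^ 2 * t ^ 2); [ring|].
  rewrite chord_sq by lra. ring.
Qed.

Definition disk_mean : R := RInt k 0 (L ^ 2) / L ^ 2.

Definition mean_dev (q : R) : R := RInt k 0 q / q - disk_mean.

Definition mean_dev' (q : R) : R := k q / q - RInt k 0 q / q ^ 2.

Lemma continuity_pt_RInt_k q : continuity_pt (fun q => RInt k 0 q) q.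
Proof. apply continuity_pt_of_ex_derive. eexists. apply is_derive_RInt_R, Hk. Qed.

Lemma mean_dev_derive q : 0 < q -> is_derive mean_dev q (mean_dev' q).
Proof.
  intros Hq. unfold mean_dev, mean_dev'.
  replace (k q / q - RInt k 0 q / q ^ 2) with ((k q * q - RInt k 0 q * 1) / q ^ 2 - 0) by (field; lra).
  apply (is_derive_minus (K:=R_AbsRing) (V:=R_NormedModule)); [|auto_derive; auto].
  apply (is_derive_div (fun q => RInt k 0 q) (fun x => x));
    [apply is_derive_RInt_R, Hk|apply (is_derive_id (K:=R_AbsRing))|lra].
Qed.

Lemma continuity_pt_mean_dev q : 0 < q -> continuity_pt mean_dev q.
Proof. intros Hq. apply continuity_pt_of_ex_derive. eexists. apply mean_dev_derive, Hq. Qed.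

Lemma continuity_pt_mean_dev' q : 0 < q -> continuity_pt mean_dev' q.
Proof.
  intros Hq. apply continuity_pt_minus.
  - apply continuity_pt_div; [apply Hk|apply derivable_continuous_pt, derivable_pt_id|lra].
  - apply continuity_pt_div; [apply continuity_pt_RInt_k| |apply pow_nonzero; lra].
    apply derivable_continuous_pt, derivable_pt_pow.
Qed.

Lemma mean_dev_L2 : mean_dev (L ^ 2) = 0.
Proof. unfold mean_dev, disk_mean. ring. Qed.

(* [k - disk_mean] is the derivative of [q * mean_dev q]. *)
Lemma k_minus_disk_mean q : 0 < q -> k q - disk_mean = mean_dev q + q * mean_dev' q.
Proof. intros Hq. unfold mean_dev, mean_dev'. field. lra. Qed.

Lemma mean_dev_bounded : exists K, 0 <= K /\ forall q, 0 < q <= L ^ 2 -> Rabs (mean_dev q) <= K.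
Proof.
  destruct (bounded_continuity k 0 (L ^ 2)) as [M HM].
  { intros x _. apply continuity_pt_filterlim, Hk. }
  assert (HM' : forall x, 0 <= x <= L ^ 2 -> Rabs (k x) <= M) by (intros x Hx; left; apply HM, Hx).
  assert (0 <= M) by (pose proof (HM' 0 ltac:(split; nra)); pose proof (Rabs_pos (k 0)); lra).
  exists (M + Rabs disk_mean). split; [pose proof (Rabs_pos disk_mean); lra|].
  intros q Hq. unfold mean_dev.
  assert (HF : Rabs (RInt k 0 q) <= (q - 0) * M).
  { apply abs_RInt_le_const; [lra|apply ex_RInt_continuous_R, Hk|].
    intros t Ht. apply HM'. lra. }
  assert (Rabs (RInt k 0 q / q) <= M).
  { unfold Rdiv. rewrite Rabs_mult, Rabs_inv, (Rabs_pos_eq q) by lra.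
    apply Rmult_le_reg_r with q; [lra|]. rewrite Rmult_assoc, Rinv_l by lra. lra. }
  eapply Rle_trans; [apply Rabs_triang|]. rewrite Rabs_Ropp. lra.
Qed.

Lemma chord_mean_dev_bounded :
  exists K, 0 <= K /\ forall x, 0 < x <= L -> Rabs (chord_mean L mean_dev x) <= K.
Proof.
  destruct mean_dev_bounded as [K [HK0 HK]].
  exists (2 * K). split; [lra|]. intros x Hx.
  replace (2 * K) with ((1 - -1) * K) by ring.
  apply abs_RInt_le_const; [lra|apply ex_RInt_chord_point; [lra|lra|apply continuity_pt_mean_dev]|].
  intros t Ht. apply HK. split; [apply chord_point_sq_pos_in, Hx|apply chord_point_sq_le; lra].
Qed.

Lemma mean_dev_chord_point_derive x t : 0 < chord_point_sq L x t ->
  is_derive (fun z => mean_dev (chord_point_sq L z t)) x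
    (2 * x * (1 - t ^ 2) * mean_dev' (chord_point_sq L x t)).
Proof.
  intros Hq. apply (is_derive_comp mean_dev (fun z => chord_point_sq L z t)).
  - apply mean_dev_derive, Hq.
  - unfold chord_point_sq. auto_derive; [auto|ring].
Qed.

Let dev_slope_mean x := RInt (fun t => mean_dev' (chord_point_sq L x t)) (-1) 1.
Let dev_slope_moment x := RInt (fun t => t ^ 2 * mean_dev' (chord_point_sq L x t)) (-1) 1.

Lemma ex_RInt_dev_slope x : x <> 0 ->
  ex_RInt (fun t => mean_dev' (chord_point_sq L x t)) (-1) 1 /\
  ex_RInt (fun t => t ^ 2 * mean_dev' (chord_point_sq L x t)) (-1) 1.
Proof.
  intros Hx. split; [apply ex_RInt_chord_point; auto using continuity_pt_mean_dev'|].
  apply ex_RInt_continuous_le; [lra|]. intros t Ht.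
  apply continuity_pt_mult; [apply derivable_continuous_pt, derivable_pt_pow|].
  apply (continuity_pt_comp (chord_point_sq L x) mean_dev');
    [apply continuity_pt_chord_point_sq|apply continuity_pt_mean_dev', chord_point_sq_pos; auto].
Qed.

Lemma chord_mean_dev_derive x : 0 < x < L ->
  is_derive (chord_mean L mean_dev) x (2 * x * dev_slope_mean x - 2 * x * dev_slope_moment x).
Proof.
  intros Hx.
  set (r := Rmin (x / 2) (L - x)).
  assert (Hr : 0 < r) by (apply Rmin_glb_lt; lra).
  assert (Hnb : forall z, Rabs (z - x) < r -> 0 < z < L).
  { intros z Hz. assert (r <= x / 2) by apply Rmin_l. assert (r <= L - x) by apply Rmin_r.
    apply Rabs_def2 in Hz. lra. }
  destruct (ex_RInt_dev_slope x ltac:(lra)) as [HA HB].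
  replace (2 * x * dev_slope_mean x - 2 * x * dev_slope_moment x)
    with (RInt (fun t => Derive (fun u => mean_dev (chord_point_sq L u t)) x) (-1) 1).
  - apply (is_derive_RInt_param (fun u t => mean_dev (chord_point_sq L u t))).
    + exists (mkposreal _ Hr). intros z Hz t Ht. change (Rabs (z - x) < r) in Hz.
      rewrite Rmin_left, Rmax_right in Ht by lra.
      eexists. apply mean_dev_chord_point_derive, chord_point_sq_pos_in. specialize (Hnb z Hz). lra.
    + intros t Ht. rewrite Rmin_left, Rmax_right in Ht by lra.
      apply (continuity_2d_pt_ext_loc
        (fun u v => 2 * u * (1 - v ^ 2) * mean_dev' (chord_point_sq L u v))).
      * exists (mkposreal _ Hr). intros u v Hu _. simpl in Hu. specialize (Hnb u Hu).
        symmetry. apply is_derive_unique, mean_dev_chord_point_derive, chord_point_sq_pos_in. lra.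
      * apply continuity_2d_pt_mult.
        -- simpl. repeat first [apply continuity_2d_pt_mult | apply continuity_2d_pt_minus
             | apply continuity_2d_pt_id1 | apply continuity_2d_pt_id2 | apply continuity_2d_pt_const].
        -- apply continuity_1d_2d_pt_comp; [|apply continuity_2d_pt_chord_point_sq].
           apply continuity_pt_mean_dev', chord_point_sq_pos; lra.
    + exists (mkposreal _ Hr). intros z Hz. change (Rabs (z - x) < r) in Hz.
      specialize (Hnb z Hz). apply ex_RInt_chord_point; [lra|lra|apply continuity_pt_mean_dev].
  - unfold dev_slope_mean, dev_slope_moment.
    rewrite <- !RInt_scal_R, <- RInt_minus_R by auto using ex_RInt_scal_R.
    apply RInt_ext_R. intros t Ht. rewrite Rmin_left, Rmax_right in Ht by lra.
    transitivity (2 * x * (1 - t ^ 2) * mean_dev' (chord_point_sq L x t)); [|ring].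
    apply is_derive_unique, mean_dev_chord_point_derive, chord_point_sq_pos; lra.
Qed.

Lemma chord_mean_dev_by_parts x : x <> 0 -> -L <= x <= L ->
  chord_mean L mean_dev x + 2 * (L ^ 2 - x ^ 2) * dev_slope_moment x = 0.
Proof.
  intros Hx0 Hx.
  destruct (ex_RInt_dev_slope x Hx0) as [_ HB].
  assert (HH : ex_RInt (fun t => mean_dev (chord_point_sq L x t)) (-1) 1)
    by (apply ex_RInt_chord_point; auto using continuity_pt_mean_dev).
  unfold chord_mean, dev_slope_moment.
  rewrite <- RInt_scal_R, <- RInt_plus_R by auto using ex_RInt_scal_R.
  set (G := fun t => t * mean_dev (chord_point_sq L x t)).
  rewrite (is_RInt_unique _ _ _ (minus (G 1) (G (-1)))).
  - unfold minus, plus, opp, G; simpl.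
    replace (chord_point_sq L x 1) with (L ^ 2) by (unfold chord_point_sq; ring).
    replace (chord_point_sq L x (-1)) with (L ^ 2) by (unfold chord_point_sq; ring).
    rewrite mean_dev_L2. ring.
  - apply (is_RInt_derive (V:=R_CompleteNormedModule) G).
    + intros t Ht. rewrite Rmin_left, Rmax_right in Ht by lra.
      assert (Hq : 0 < chord_point_sq L x t) by (apply chord_point_sq_pos; assumption).
      replace (mean_dev (chord_point_sq L x t) + 2 * (L ^ 2 - x ^ 2) * (t ^ 2 * mean_dev' (chord_point_sq L x t)))
        with (1 * mean_dev (chord_point_sq L x t)
              + t * ((2 * t * (L ^ 2 - x ^ 2)) * mean_dev' (chord_point_sq L x t))) by ring.
      apply (is_derive_mult_R (fun t => t) (fun t => mean_dev (chord_point_sq L x t)));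
        [apply (is_derive_id (K:=R_AbsRing))|].
      apply (is_derive_comp mean_dev (chord_point_sq L x)); [apply mean_dev_derive, Hq|].
      unfold chord_point_sq. auto_derive; [auto|ring].
    + intros t Ht. rewrite Rmin_left, Rmax_right in Ht by lra.
      apply continuity_pt_filterlim, continuity_pt_plus.
      * apply (continuity_pt_comp (chord_point_sq L x) mean_dev);
          [apply continuity_pt_chord_point_sq|apply continuity_pt_mean_dev, chord_point_sq_pos; auto].
      * apply continuity_pt_mult; [apply continuity_pt_cst|].
        apply continuity_pt_mult; [apply derivable_continuous_pt, derivable_pt_pow|].
        apply (continuity_pt_comp (chord_point_sq L x) mean_dev');
          [apply continuity_pt_chord_point_sq|apply continuity_pt_mean_dev', chord_point_sq_pos; auto].
Qed.

Lemma chord_mean_minus_disk_mean x : x <> 0 ->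
  chord_mean L k x - 2 * disk_mean
  = chord_mean L mean_dev x + x ^ 2 * dev_slope_mean x
    - x ^ 2 * dev_slope_moment x + L ^ 2 * dev_slope_moment x.
Proof.
  intros Hx.
  destruct (ex_RInt_dev_slope x Hx) as [HA HB].
  assert (HH : ex_RInt (fun t => mean_dev (chord_point_sq L x t)) (-1) 1)
    by (apply ex_RInt_chord_point; auto using continuity_pt_mean_dev).
  assert (Hc : ex_RInt (fun _ => disk_mean) (-1) 1)
    by (apply ex_RInt_continuous_R, continuity_pt_cst).
  unfold chord_mean, dev_slope_mean, dev_slope_moment.
  transitivity (RInt (fun t => k (chord_point_sq L x t) - disk_mean) (-1) 1).
  { rewrite RInt_minus_R, RInt_const_R by auto using ex_RInt_k_chord_point. ring. }
  transitivity (RInt (fun t => mean_dev (chord_point_sq L x t)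
    + (x ^ 2 * mean_dev' (chord_point_sq L x t)
       - x ^ 2 * (t ^ 2 * mean_dev' (chord_point_sq L x t))
       + L ^ 2 * (t ^ 2 * mean_dev' (chord_point_sq L x t)))) (-1) 1).
  { apply RInt_ext_R. intros t Ht. rewrite Rmin_left, Rmax_right in Ht by lra.
    rewrite k_minus_disk_mean by (apply chord_point_sq_pos; lra). unfold chord_point_sq. ring. }
  assert (HA' := ex_RInt_scal_R _ (x ^ 2) _ _ HA).
  assert (HB' := ex_RInt_scal_R _ (x ^ 2) _ _ HB).
  assert (HB'' := ex_RInt_scal_R _ (L ^ 2) _ _ HB).
  rewrite RInt_plus_R, RInt_plus_R, RInt_minus_R, !RInt_scal_R;
    auto using ex_RInt_plus_R, ex_RInt_minus_R. ring.
Qed.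

Definition chord_antideriv (x : R) : R := x * chord L x * chord_mean L mean_dev x / 2.

(* Since [mean_dev] integrates the oscillation [k - disk_mean] by parts, the
   disk-mean-free part of the section integrals is an exact derivative. *)
Lemma chord_antideriv_derive x : 0 < x < L ->
  is_derive chord_antideriv x (chord L x * (chord_mean L k x - 2 * disk_mean)).
Proof.
  intros Hx.
  assert (Hc2 : chord L x ^ 2 = L ^ 2 - x ^ 2) by (apply chord_sq; lra).
  assert (Hc0 : 0 < chord L x) by (apply sqrt_lt_R0; nra).
  assert (Dc : is_derive (chord L) x (- x / chord L x)).
  { unfold chord. auto_derive; [nra|].
    replace (L * (L * 1) + - (x * (x * 1))) with (L ^ 2 - x ^ 2) by ring.
    field. apply Rgt_not_eq, sqrt_lt_R0. nra. }
  pose proof (chord_mean_dev_by_parts x ltac:(lra) ltac:(lra)) as Hparts.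
  rewrite chord_mean_minus_disk_mean by lra.
  apply (is_derive_ext (fun t => / 2 * (t * chord L t * chord_mean L mean_dev t))).
  { intros t. unfold chord_antideriv. simpl. field. }
  replace (chord L x * (chord_mean L mean_dev x + x ^ 2 * dev_slope_mean x
             - x ^ 2 * dev_slope_moment x + L ^ 2 * dev_slope_moment x))
    with (/ 2 * ((1 * chord L x + x * (- x / chord L x)) * chord_mean L mean_dev x
           + (x * chord L x) * (2 * x * dev_slope_mean x - 2 * x * dev_slope_moment x))).
  - apply is_derive_scal.
    apply (is_derive_mult_R (fun t => t * chord L t) (chord_mean L mean_dev));
      [|apply chord_mean_dev_derive, Hx].
    apply (is_derive_mult_R (fun t => t) (chord L)); [apply (is_derive_id (K:=R_AbsRing))|exact Dc].
  - replace (chord_mean L mean_dev x) with (- (2 * (L ^ 2 - x ^ 2) * dev_slope_moment x)) by lra.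
    replace (L ^ 2) with (chord L x ^ 2 + x ^ 2) by lra. field. lra.
Qed.

Lemma chord_antideriv_bound : exists K, 0 <= K /\
  forall y, 0 <= y <= L -> Rabs (chord_antideriv y) <= y * chord L y * K.
Proof.
  destruct chord_mean_dev_bounded as [K [HK0 HK]].
  exists K. split; [exact HK0|]. intros y Hy.
  pose proof (chord_nonneg L y).
  assert (0 <= y * chord L y) by nra.
  unfold chord_antideriv, Rdiv.
  rewrite !Rabs_mult, Rabs_inv, (Rabs_pos_eq y), (Rabs_pos_eq (chord L y)), (Rabs_pos_eq 2) by lra.
  destruct (Req_dec y 0) as [->|Hy0]; [rewrite !Rmult_0_l; lra|].
  specialize (HK y ltac:(lra)).
  assert (y * chord L y * Rabs (chord_mean L mean_dev y) <= y * chord L y * K)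
    by (apply Rmult_le_compat_l; lra).
  nra.
Qed.

Lemma RInt_chord_mean_minus_disk_mean :
  RInt (fun x => chord L x * (chord_mean L k x - 2 * disk_mean)) 0 L = 0 :> R.
Proof.
  destruct chord_antideriv_bound as [K [HK0 HK]].
  set (bnd := fun y => y * chord L y * K).
  assert (Hbnd : forall y, continuity_pt bnd y).
  { intros y. apply continuity_pt_mult; [apply continuity_pt_mult|apply continuity_pt_cst].
    - apply derivable_continuous_pt, derivable_pt_id.
    - apply continuity_pt_chord. }
  assert (HL0 : chord L L = 0) by (unfold chord; rewrite Rminus_diag; apply sqrt_0).
  assert (HF0 : chord_antideriv 0 = 0) by (unfold chord_antideriv; field).
  assert (HFL : chord_antideriv L = 0) by (unfold chord_antideriv; rewrite HL0; field).
  rewrite (RInt_derive_interior chord_antideriv _ 0 L HL).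
  - rewrite HF0, HFL. apply Rminus_diag.
  - apply (vanishing_bound_eps _ bnd); auto. unfold bnd. ring.
  - apply (vanishing_bound_eps _ bnd); auto. unfold bnd. rewrite HL0. ring.
  - apply chord_antideriv_derive.
  - intros x _. apply continuity_pt_mult; [apply continuity_pt_chord|].
    apply continuity_pt_minus; [apply continuity_pt_chord_mean|apply continuity_pt_cst].
Qed.

Theorem RInt_disk_radial :
  RInt (fun x => RInt (fun y => k (x ^ 2 + y ^ 2)) (- chord L x) (chord L x)) (- L) L
  = PI * RInt k 0 (L ^ 2) :> R.
Proof.
  set (f := fun x => chord L x * (chord_mean L k x - 2 * disk_mean)).
  assert (Hf : forall x, continuity_pt f x).
  { intros x. apply continuity_pt_mult; [apply continuity_pt_chord|].
    apply continuity_pt_minus; [apply continuity_pt_chord_mean|apply continuity_pt_cst]. }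
  assert (Hc : forall x, continuity_pt (fun x => chord L x * 2) x)
    by (intros x; apply continuity_pt_mult; [apply continuity_pt_chord|apply continuity_pt_cst]).
  rewrite (RInt_ext_R _ (fun x => f x + disk_mean * (chord L x * 2))).
  - rewrite RInt_plus_R, RInt_scal_R, RInt_chord, <- (RInt_Chasles_R f (- L) 0 L), RInt_even;
      auto using ex_RInt_continuous_R, ex_RInt_scal_R.
    + unfold f. rewrite RInt_chord_mean_minus_disk_mean. unfold disk_mean. field. nra.
    + intros x. unfold f. unfold chord. replace ((- x) ^ 2) with (x ^ 2) by ring.
      do 2 f_equal. unfold chord_mean. apply RInt_ext_R. intros t _.
      rewrite chord_point_sq_opp. reflexivity.
  - intros x Hx. rewrite Rmin_left, Rmax_right in Hx by lra.
    rewrite RInt_chord_section by lra. unfold f. ring.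
Qed.

End RadialIntegration.

(** * Asymptotics of the radial energy integral *)

Lemma cap_height_taylor r q : 0 < r -> 0 <= q < r ^ 2 ->
  0 <= cap_height r q - q / (2 * r) - q ^ 2 / (8 * r ^ 3) <= q ^ 3 / (2 * r ^ 5).
Proof.
  intros Hr Hq. unfold cap_height.
  set (s := sqrt (r ^ 2 - q)).
  assert (Hs0 : 0 < s) by (apply sqrt_lt_R0; lra).
  assert (Hs2 : s ^ 2 = r ^ 2 - q) by (apply pow2_sqrt; lra).
  assert (Hsr : s <= r) by nra.
  (* rationalising [r - s] twice leaves an explicit cubic remainder *)
  assert (E : r - s - q / (2 * r) - q ^ 2 / (8 * r ^ 3)
              = q ^ 3 * (3 * r + s) / (8 * r ^ 3 * (r + s) ^ 3)).
  { replace q with (r ^ 2 - s ^ 2) by lra. field. split; nra. }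
  assert (0 < r ^ 3) by (apply pow_lt; lra).
  assert (Hrs : 0 < (r + s) ^ 3) by (apply pow_lt; lra).
  assert (0 <= q ^ 3) by (apply pow_le; lra).
  rewrite E. split.
  - apply Rdiv_le_0_compat; [apply Rmult_le_pos; lra|]. apply Rmult_lt_0_compat; [lra|exact Hrs].
  - assert (0 < r ^ 5) by (apply pow_lt; lra).
    apply Rmult_le_reg_r with (8 * r ^ 3 * (r + s) ^ 3 * (2 * r ^ 5)).
    { repeat apply Rmult_lt_0_compat; lra. }
    replace (q ^ 3 * (3 * r + s) / (8 * r ^ 3 * (r + s) ^ 3) * (8 * r ^ 3 * (r + s) ^ 3 * (2 * r ^ 5)))
      with (q ^ 3 * ((3 * r + s) * (2 * r ^ 5))) by (field; split; nra).
    replace (q ^ 3 / (2 * r ^ 5) * (8 * r ^ 3 * (r + s) ^ 3 * (2 * r ^ 5)))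
      with (q ^ 3 * (8 * r ^ 3 * (r + s) ^ 3)) by (field; nra).
    apply Rmult_le_compat_l; [lra|].
    assert (r ^ 2 * (r + s) <= (r + s) ^ 3) by nra.
    assert ((3 * r + s) * r ^ 2 <= 4 * r ^ 3) by nra.
    nra.
Qed.

Lemma inv_cube_taylor A D : 0 < A -> 0 <= D ->
  0 <= 1 / (A + D) ^ 3 - 1 / A ^ 3 + 3 * D / A ^ 4 <= 6 * D ^ 2 / A ^ 5.
Proof.
  intros HA HD.
  assert (E : 1 / (A + D) ^ 3 - 1 / A ^ 3 + 3 * D / A ^ 4 =
              D ^ 2 * (6 * A ^ 2 + 8 * A * D + 3 * D ^ 2) / (A ^ 4 * (A + D) ^ 3))
    by (field; split; lra).
  assert (0 < A ^ 4) by (apply pow_lt; lra).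
  assert (0 < A ^ 5) by (apply pow_lt; lra).
  assert (0 < (A + D) ^ 3) by (apply pow_lt; lra).
  assert (0 <= D ^ 2) by apply pow2_ge_0.
  rewrite E. split.
  - apply Rdiv_le_0_compat; [apply Rmult_le_pos; nra|apply Rmult_lt_0_compat; lra].
  - apply Rmult_le_reg_r with (A ^ 5 * (A + D) ^ 3); [apply Rmult_lt_0_compat; lra|].
    replace (D ^ 2 * (6 * A ^ 2 + 8 * A * D + 3 * D ^ 2) / (A ^ 4 * (A + D) ^ 3) * (A ^ 5 * (A + D) ^ 3))
      with (D ^ 2 * (6 * A ^ 3 + 8 * A ^ 2 * D + 3 * A * D ^ 2)) by (field; split; lra).
    replace (6 * D ^ 2 / A ^ 5 * (A ^ 5 * (A + D) ^ 3))
      with (D ^ 2 * (6 * A ^ 3 + 18 * A ^ 2 * D + 18 * A * D ^ 2 + 6 * D ^ 3)) by (field; lra).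
    apply Rmult_le_compat_l; [lra|].
    assert (0 <= A ^ 2 * D) by (apply Rmult_le_pos; [apply pow2_ge_0|lra]).
    assert (0 <= A * D ^ 2) by (apply Rmult_le_pos; lra).
    assert (0 <= D ^ 3) by (apply pow_le; lra).
    lra.
Qed.

Lemma inv_cube_expansion_bound a b K K3 q A D : 0 < a -> 0 <= K3 -> 0 <= q -> a * q <= A ->
  0 < A -> 0 <= D - b * q ^ 2 <= K3 * q ^ 3 -> 0 <= D <= K * q ^ 2 ->
  Rabs (q / (A + D) ^ 3 - (q / A ^ 3 - 3 * b * (q ^ 3 / A ^ 4)))
  <= 6 * K ^ 2 / a ^ 5 + 3 * K3 / a ^ 4.
Proof.
  intros Ha HK3 Hq HaA HA [HD1 HD2] [HD0 HDK].
  assert (Hr : 0 <= q / A <= / a).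
  { split; [apply Rdiv_le_0_compat; lra|].
    apply Rmult_le_reg_r with (A * a); [nra|].
    replace (q / A * (A * a)) with (a * q) by (field; lra).
    replace (/ a * (A * a)) with A by (field; lra). lra. }
  (* second-order expansion in [D], then first-order expansion of [D] *)
  replace (q / (A + D) ^ 3 - (q / A ^ 3 - 3 * b * (q ^ 3 / A ^ 4)))
    with (q * (1 / (A + D) ^ 3 - 1 / A ^ 3 + 3 * D / A ^ 4) - 3 * q * (D - b * q ^ 2) / A ^ 4)
    by (field; split; lra).
  pose proof (inv_cube_taylor A D HA HD0) as HI.
  assert (T1 : 0 <= q * (1 / (A + D) ^ 3 - 1 / A ^ 3 + 3 * D / A ^ 4) <= 6 * K ^ 2 / a ^ 5).
  { split; [apply Rmult_le_pos; lra|].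
    apply Rle_trans with (q * (6 * D ^ 2 / A ^ 5)); [apply Rmult_le_compat_l; lra|].
    apply Rle_trans with (6 * K ^ 2 * (q / A) ^ 5).
    - replace (q * (6 * D ^ 2 / A ^ 5)) with (6 * (q * D ^ 2) / A ^ 5) by (field; lra).
      replace (6 * K ^ 2 * (q / A) ^ 5) with (6 * (q * (K * q ^ 2) ^ 2) / A ^ 5) by (field; lra).
      apply Rmult_le_compat_r; [left; apply Rinv_0_lt_compat, pow_lt; lra|].
      apply Rmult_le_compat_l; [lra|]. apply Rmult_le_compat_l; [lra|]. apply pow_incr. lra.
    - replace (6 * K ^ 2 / a ^ 5) with (6 * K ^ 2 * (/ a) ^ 5) by (field; lra).
      apply Rmult_le_compat_l; [nra|apply pow_incr; lra]. }
  assert (T2 : 0 <= 3 * q * (D - b * q ^ 2) / A ^ 4 <= 3 * K3 / a ^ 4).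
  { assert (0 < A ^ 4) by (apply pow_lt; lra).
    split; [apply Rdiv_le_0_compat; [apply Rmult_le_pos; lra|lra]|].
    apply Rle_trans with (3 * K3 * (q / A) ^ 4).
    - replace (3 * K3 * (q / A) ^ 4) with (3 * q * (K3 * q ^ 3) / A ^ 4) by (field; lra).
      apply Rmult_le_compat_r; [left; apply Rinv_0_lt_compat; lra|].
      apply Rmult_le_compat_l; lra.
    - replace (3 * K3 / a ^ 4) with (3 * K3 * (/ a) ^ 4) by (field; lra).
      apply Rmult_le_compat_l; [lra|apply pow_incr; lra]. }
  apply Rabs_le. lra.
Qed.

Section Asymptotics.
Variables (Rad Srad L : R).
Hypotheses (HR : 0 < Rad) (HS : 0 < Srad) (HL : 0 < L) (HLm : L < Rmin Rad Srad).

(* The Taylor coefficients [1 / (2 R1)] and [1 / (8 R3^3)] of the gap in [q = r^2],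
   and the remainder constant on [0 <= q <= L^2]. *)
Definition gap_c1 : R := / Srad / 2 + / Rad / 2.
Definition gap_c2 : R := / (8 * Srad ^ 3) + / (8 * Rad ^ 3).
Definition gap_c3 : R := / (2 * Srad ^ 5) + / (2 * Rad ^ 5).

Lemma gap_c1_pos : 0 < gap_c1.
Proof.
  unfold gap_c1. assert (0 < / Srad) by (apply Rinv_0_lt_compat; lra).
  assert (0 < / Rad) by (apply Rinv_0_lt_compat; lra). lra.
Qed.

Lemma gap_c2_pos : 0 < gap_c2.
Proof.
  unfold gap_c2.
  assert (0 < / (8 * Srad ^ 3)) by (apply Rinv_0_lt_compat, Rmult_lt_0_compat; [lra|apply pow_lt; lra]).
  assert (0 < / (8 * Rad ^ 3)) by (apply Rinv_0_lt_compat, Rmult_lt_0_compat; [lra|apply pow_lt; lra]).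
  lra.
Qed.

Lemma gap_c3_pos : 0 < gap_c3.
Proof.
  unfold gap_c3.
  assert (0 < / (2 * Srad ^ 5)) by (apply Rinv_0_lt_compat, Rmult_lt_0_compat; [lra|apply pow_lt; lra]).
  assert (0 < / (2 * Rad ^ 5)) by (apply Rinv_0_lt_compat, Rmult_lt_0_compat; [lra|apply pow_lt; lra]).
  lra.
Qed.

Lemma gap_taylor h q : 0 <= q <= L ^ 2 ->
  0 <= gap Rad Srad h q - h - gap_c1 * q - gap_c2 * q ^ 2 <= gap_c3 * q ^ 3.
Proof.
  intros Hq.
  assert (L < Rad) by (eapply Rlt_le_trans; [exact HLm|apply Rmin_l]).
  assert (L < Srad) by (eapply Rlt_le_trans; [exact HLm|apply Rmin_r]).
  pose proof (cap_height_taylor Srad q HS ltac:(nra)) as ES.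
  pose proof (cap_height_taylor Rad q HR ltac:(nra)) as ER.
  unfold gap. rewrite Rabs_pos_eq by lra.
  replace (h + cap_height Srad q + cap_height Rad q - h - gap_c1 * q - gap_c2 * q ^ 2)
    with ((cap_height Srad q - q / (2 * Srad) - q ^ 2 / (8 * Srad ^ 3))
          + (cap_height Rad q - q / (2 * Rad) - q ^ 2 / (8 * Rad ^ 3)))
    by (unfold gap_c1, gap_c2; field; split; lra).
  replace (gap_c3 * q ^ 3) with (q ^ 3 / (2 * Srad ^ 5) + q ^ 3 / (2 * Rad ^ 5))
    by (unfold gap_c3; field; split; lra).
  lra.
Qed.

Lemma gap_integrand_taylor : exists C, forall h q, 0 < h -> 0 <= q <= L ^ 2 ->
  Rabs (q / gap Rad Srad h q ^ 3
        - (q / (h + gap_c1 * q) ^ 3 - 3 * gap_c2 * (q ^ 3 / (h + gap_c1 * q) ^ 4))) <= C.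
Proof.
  pose proof gap_c1_pos. pose proof gap_c2_pos. pose proof gap_c3_pos.
  set (K := gap_c2 + gap_c3 * L ^ 2).
  exists (6 * K ^ 2 / gap_c1 ^ 5 + 3 * gap_c3 / gap_c1 ^ 4).
  intros h q Hh Hq.
  pose proof (gap_taylor h q Hq) as HD.
  replace (gap Rad Srad h q) with ((h + gap_c1 * q) + (gap Rad Srad h q - h - gap_c1 * q)) by ring.
  apply inv_cube_expansion_bound; try nra.
  assert (q ^ 3 <= L ^ 2 * q ^ 2)
    by (replace (q ^ 3) with (q * q ^ 2) by ring; apply Rmult_le_compat_r; [apply pow2_ge_0|lra]).
  assert (0 <= gap_c2 * q ^ 2) by (apply Rmult_le_pos; [lra|apply pow2_ge_0]).
  unfold K. nra.
Qed.

Definition log_antideriv (h q : R) : R :=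
  (ln (h + gap_c1 * q) + 3 * h / (h + gap_c1 * q)
   - 3 * h ^ 2 / (2 * (h + gap_c1 * q) ^ 2) + h ^ 3 / (3 * (h + gap_c1 * q) ^ 3)) / gap_c1 ^ 4.

Lemma RInt_model_first h : 0 < h ->
  RInt (fun q => q / (h + gap_c1 * q) ^ 3) 0 (L ^ 2)
  = (L ^ 2) ^ 2 / (2 * h * (h + gap_c1 * L ^ 2) ^ 2) :> R.
Proof.
  intros Hh. pose proof gap_c1_pos. assert (0 < L ^ 2) by nra.
  set (F := fun q => q ^ 2 / (2 * h * (h + gap_c1 * q) ^ 2)).
  rewrite (is_RInt_unique _ _ _ (minus (F (L ^ 2)) (F 0))).
  - unfold minus, plus, opp, F; simpl. field. nra.
  - apply (is_RInt_derive (V:=R_CompleteNormedModule) F);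
      intros x Hx; rewrite Rmin_left, Rmax_right in Hx by lra;
      assert (0 < h + gap_c1 * x) by nra.
    + unfold F. auto_derive; [apply Rgt_not_eq; repeat apply Rmult_lt_0_compat; lra|]. field. lra.
    + apply (ex_derive_continuous (K:=R_AbsRing) (V:=R_NormedModule)).
      auto_derive. repeat split; apply Rgt_not_eq; repeat apply Rmult_lt_0_compat; lra.
Qed.

Lemma RInt_model_second h : 0 < h ->
  RInt (fun q => q ^ 3 / (h + gap_c1 * q) ^ 4) 0 (L ^ 2)
  = log_antideriv h (L ^ 2) - log_antideriv h 0 :> R.
Proof.
  intros Hh. pose proof gap_c1_pos. assert (0 < L ^ 2) by nra.
  rewrite (is_RInt_unique _ _ _ (minus (log_antideriv h (L ^ 2)) (log_antideriv h 0))).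
  - unfold minus, plus, opp; simpl. ring.
  - apply (is_RInt_derive (V:=R_CompleteNormedModule) (log_antideriv h));
      intros x Hx; rewrite Rmin_left, Rmax_right in Hx by lra;
      assert (0 < h + gap_c1 * x) by nra.
    + unfold log_antideriv.
      auto_derive; [repeat split; try apply Rgt_not_eq; repeat apply Rmult_lt_0_compat; lra|].
      field. lra.
    + apply (ex_derive_continuous (K:=R_AbsRing) (V:=R_NormedModule)).
      auto_derive. repeat split; apply Rgt_not_eq; repeat apply Rmult_lt_0_compat; lra.
Qed.

Lemma model_first_bound : exists C, forall h, 0 < h <= 1 ->
  Rabs ((L ^ 2) ^ 2 / (2 * h * (h + gap_c1 * L ^ 2) ^ 2) - 1 / (2 * gap_c1 ^ 2 * h)) <= C.
Proof.
  pose proof gap_c1_pos as Ha. set (a := gap_c1) in *. set (T := L ^ 2).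
  assert (HT : 0 < T) by (unfold T; nra). assert (HaT : 0 < a * T) by nra.
  exists ((1 + 2 * a * T) / (2 * a ^ 2 * (a * T) ^ 2)).
  intros h Hh. set (X := h + a * T).
  assert (HX : a * T <= X <= 1 + a * T) by (unfold X; lra).
  assert (HD : 0 < 2 * a ^ 2 * X ^ 2) by (apply Rmult_lt_0_compat; [nra|apply pow_lt; lra]).
  replace (T ^ 2 / (2 * h * X ^ 2) - 1 / (2 * a ^ 2 * h)) with (- ((h + 2 * a * T) / (2 * a ^ 2 * X ^ 2)))
    by (unfold X; field; repeat split; lra).
  rewrite Rabs_Ropp, Rabs_pos_eq by (apply Rdiv_le_0_compat; nra).
  unfold Rdiv. apply Rmult_le_compat; [nra|left; apply Rinv_0_lt_compat, HD|lra|].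
  apply Rinv_le_contravar; [apply Rmult_lt_0_compat; [nra|apply pow_lt; lra]|].
  apply Rmult_le_compat_l; [nra|apply pow_incr; lra].
Qed.

Lemma model_second_bound : exists C, forall h, 0 < h <= 1 ->
  Rabs (log_antideriv h (L ^ 2) - log_antideriv h 0 + ln h / gap_c1 ^ 4) <= C.
Proof.
  pose proof gap_c1_pos as Ha. set (T := L ^ 2).
  assert (HT : 0 < T) by (unfold T; nra). assert (HaT : 0 < gap_c1 * T) by nra.
  assert (H4 : 0 < / gap_c1 ^ 4) by (apply Rinv_0_lt_compat, pow_lt; lra).
  exists ((Rabs (ln (gap_c1 * T)) + Rabs (ln (1 + gap_c1 * T)) + 10) / gap_c1 ^ 4).
  intros h Hh. set (X := h + gap_c1 * T). set (u := h / X).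
  assert (HX : gap_c1 * T <= X <= 1 + gap_c1 * T) by (unfold X; lra).
  assert (Hu : 0 < u <= 1).
  { unfold u. split; [apply Rdiv_lt_0_compat; lra|].
    apply Rmult_le_reg_r with X; [lra|]. field_simplify; [|lra]. unfold X. lra. }
  (* [ln h] cancels against [ln (h + gap_c1 * 0)], leaving [ln X] and powers of [h / X] *)
  replace (log_antideriv h T - log_antideriv h 0 + ln h / gap_c1 ^ 4)
    with ((ln X + (3 * u - 3 * u ^ 2 / 2 + u ^ 3 / 3 - 3 + 3 / 2 - 1 / 3)) / gap_c1 ^ 4)
    by (unfold log_antideriv; fold X; replace (h + gap_c1 * 0) with h by ring;
        unfold u; field; split; lra).
  unfold Rdiv. rewrite Rabs_mult, (Rabs_pos_eq (/ gap_c1 ^ 4)) by lra.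
  apply Rmult_le_compat_r; [lra|].
  eapply Rle_trans; [apply Rabs_triang|].
  assert (Rabs (ln X) <= Rabs (ln (gap_c1 * T)) + Rabs (ln (1 + gap_c1 * T))).
  { pose proof (ln_le (gap_c1 * T) X HaT (proj1 HX)).
    pose proof (ln_le X (1 + gap_c1 * T) ltac:(lra) (proj2 HX)).
    pose proof (Rle_abs (ln (1 + gap_c1 * T))). pose proof (Rle_abs (- ln (gap_c1 * T))).
    rewrite Rabs_Ropp in H2. pose proof (Rabs_pos (ln (gap_c1 * T))).
    pose proof (Rabs_pos (ln (1 + gap_c1 * T))). apply Rabs_le. lra. }
  assert (Rabs (3 * u - 3 * u ^ 2 / 2 + u ^ 3 / 3 - 3 + 3 / 2 - 1 / 3) <= 10).
  { assert (0 <= u ^ 2 <= 1) by (split; nra). assert (0 <= u ^ 3 <= 1) by (split; simpl; nra).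
    apply Rabs_le. lra. }
  lra.
Qed.

Lemma ex_RInt_model_terms h : 0 < h ->
  ex_RInt (fun q => q / (h + gap_c1 * q) ^ 3) 0 (L ^ 2) /\
  ex_RInt (fun q => q ^ 3 / (h + gap_c1 * q) ^ 4) 0 (L ^ 2).
Proof.
  intros Hh. pose proof gap_c1_pos.
  split; apply ex_RInt_continuous_le; try nra; intros z Hz;
    assert (0 < h + gap_c1 * z) by nra;
    apply continuity_pt_of_ex_derive; auto_derive;
    apply Rgt_not_eq; repeat apply Rmult_lt_0_compat; lra.
Qed.

Lemma RInt_model h : 0 < h ->
  RInt (fun q => q / (h + gap_c1 * q) ^ 3 - 3 * gap_c2 * (q ^ 3 / (h + gap_c1 * q) ^ 4)) 0 (L ^ 2)
  = (L ^ 2) ^ 2 / (2 * h * (h + gap_c1 * L ^ 2) ^ 2)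
    - 3 * gap_c2 * (log_antideriv h (L ^ 2) - log_antideriv h 0) :> R.
Proof.
  intros Hh. destruct (ex_RInt_model_terms h Hh) as [ex1 ex2].
  rewrite RInt_minus_R, RInt_scal_R, RInt_model_first, RInt_model_second
    by auto using ex_RInt_scal_R.
  reflexivity.
Qed.

Theorem RInt_gap_asymptotics : exists C, forall h, 0 < h <= 1 ->
  Rabs (RInt (fun q => q / gap Rad Srad h q ^ 3) 0 (L ^ 2)
        - (1 / (2 * gap_c1 ^ 2 * h) + 3 * gap_c2 / gap_c1 ^ 4 * ln h)) <= C.
Proof.
  pose proof gap_c1_pos as Ha. pose proof gap_c2_pos as Hb.
  destruct gap_integrand_taylor as [Ce HCe].
  destruct model_first_bound as [C1 HC1].
  destruct model_second_bound as [C2 HC2].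
  exists (C1 + 3 * gap_c2 * C2 + L ^ 2 * Ce). intros h Hh.
  set (m := fun q => q / (h + gap_c1 * q) ^ 3 - 3 * gap_c2 * (q ^ 3 / (h + gap_c1 * q) ^ 4)).
  assert (exf : ex_RInt (fun q => q / gap Rad Srad h q ^ 3) 0 (L ^ 2)).
  { apply ex_RInt_continuous_R. intros z.
    apply continuity_pt_div_gap_cube; [lra|lra|lra|apply derivable_continuous_pt, derivable_pt_id]. }
  assert (exm : ex_RInt m 0 (L ^ 2)).
  { destruct (ex_RInt_model_terms h ltac:(lra)).
    apply ex_RInt_minus_R; [|apply ex_RInt_scal_R]; assumption. }
  assert (He : Rabs (RInt (fun q => q / gap Rad Srad h q ^ 3 - m q) 0 (L ^ 2)) <= L ^ 2 * Ce).
  { replace (L ^ 2 * Ce) with ((L ^ 2 - 0) * Ce) by ring.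
    apply abs_RInt_le_const; [nra|apply ex_RInt_minus_R; assumption|].
    intros q Hq. apply HCe; lra. }
  rewrite RInt_minus_R in He by assumption. unfold m in He. rewrite RInt_model in He by lra.
  specialize (HC1 h Hh). specialize (HC2 h Hh).
  set (I := RInt (fun q => q / gap Rad Srad h q ^ 3) 0 (L ^ 2)) in *.
  set (M1 := (L ^ 2) ^ 2 / (2 * h * (h + gap_c1 * L ^ 2) ^ 2)) in *.
  set (M2 := log_antideriv h (L ^ 2) - log_antideriv h 0) in *.
  replace (I - (1 / (2 * gap_c1 ^ 2 * h) + 3 * gap_c2 / gap_c1 ^ 4 * ln h))
    with ((M1 - 1 / (2 * gap_c1 ^ 2 * h)) - 3 * gap_c2 * (M2 + ln h / gap_c1 ^ 4)
          + (I - (M1 - 3 * gap_c2 * M2))) by (field; lra).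
  eapply Rle_trans; [apply Rabs_triang|].
  eapply Rle_trans; [apply Rplus_le_compat_r, Rabs_triang|].
  rewrite Rabs_Ropp, Rabs_mult, (Rabs_pos_eq (3 * gap_c2)) by lra.
  assert (3 * gap_c2 * Rabs (M2 + ln h / gap_c1 ^ 4) <= 3 * gap_c2 * C2)
    by (apply Rmult_le_compat_l; lra).
  lra.
Qed.

End Asymptotics.

(** * The energy of the solution *)

Section Energy.
Variables (Rad Srad h L : R).
Hypotheses (HR : 0 < Rad) (HS : 0 < Srad) (Hh : 0 < h) (HL : 0 < L).

Lemma energy_density_solution f0 w x y : is_solution (gamma Rad Srad h) L f0 w ->
  x ^ 2 + y ^ 2 < L ^ 2 ->
  gamma Rad Srad h x y ^ 3 * (dx w x y ^ 2 + dy w x y ^ 2)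
  = 36 * f0 ^ 2 * ((x ^ 2 + y ^ 2) / gap Rad Srad h (x ^ 2 + y ^ 2) ^ 3).
Proof.
  intros Hw Hxy.
  pose proof (is_solution_radial Rad Srad h L HR HS Hh HL f0 w Hw) as Hu.
  assert (Ex : dx w x y = dx (radial_solution Rad Srad h L (-3 * f0)) x y).
  { apply Derive_ext_loc. eapply filter_imp; [|exact (open_disk_locally x y L Hxy)].
    intros t Ht. apply Hu, Ht. }
  assert (Ey : dy w x y = dy (radial_solution Rad Srad h L (-3 * f0)) x y).
  { apply Derive_ext_loc. eapply filter_imp; [|exact (open_disk_locally_snd x y L Hxy)].
    intros t Ht. apply Hu, Ht. }
  rewrite Ex, Ey, dx_radial_solution, dy_radial_solution, <- gamma_gap by assumption.
  pose proof (gamma_pos Rad Srad h HR HS Hh x y). field. lra.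
Qed.

Lemma energy_solution f0 w : is_solution (gamma Rad Srad h) L f0 w ->
  energy (gamma Rad Srad h) L w
  = 36 * PI * f0 ^ 2 * RInt (fun q => q / gap Rad Srad h q ^ 3) 0 (L ^ 2).
Proof.
  intros Hw.
  set (k := fun q => 36 * f0 ^ 2 * (q / gap Rad Srad h q ^ 3)).
  assert (Hk : forall q, continuity_pt k q).
  { intros q. apply continuity_pt_mult; [apply continuity_pt_cst|].
    apply continuity_pt_div_gap_cube; [lra|lra|lra|apply derivable_continuous_pt, derivable_pt_id]. }
  transitivity (RInt (fun x => RInt (fun y => k (x ^ 2 + y ^ 2)) (- chord L x) (chord L x)) (- L) L).
  - apply RInt_ext_R. intros x Hx. rewrite Rmin_left, Rmax_right in Hx by lra.
    apply RInt_ext_R. intros y Hy. pose proof (chord_nonneg L x).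
    rewrite Rmin_left, Rmax_right in Hy by lra.
    apply energy_density_solution; [exact Hw|].
    pose proof (chord_sq L x ltac:(lra)). nra.
  - rewrite RInt_disk_radial by assumption. unfold k.
    rewrite RInt_scal_R by (apply ex_RInt_continuous_R; intros q;
      apply continuity_pt_div_gap_cube; [lra|lra|lra|apply derivable_continuous_pt, derivable_pt_id]).
    ring.
Qed.

End Energy.

Lemma radR1_gap_c1 Rad Srad : 0 < Rad -> 0 < Srad -> radR1 Rad Srad = / (2 * gap_c1 Rad Srad).
Proof. intros HR HS. unfold radR1, gap_c1. f_equal. field. split; lra. Qed.

Lemma radR3_cube_gap_c2 Rad Srad : 0 < Rad -> 0 < Srad ->
  radR3 Rad Srad ^ 3 = / (8 * gap_c2 Rad Srad).
Proof.
  intros HR HS. unfold radR3.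
  assert (Hx : 0 < / (8 * gap_c2 Rad Srad)) by (apply Rinv_0_lt_compat; pose proof (gap_c2_pos Rad Srad HR HS); lra).
  replace (/ (/ Srad ^ 3 + / Rad ^ 3)) with (/ (8 * gap_c2 Rad Srad))
    by (unfold gap_c2; f_equal; field; split; lra).
  rewrite <- (Rpower_pow 3 (Rpower _ (1 / 3))) by apply exp_pos.
  rewrite Rpower_mult. replace (1 / 3 * INR 3) with 1 by (simpl; field).
  apply Rpower_1, Hx.
Qed.

Theorem proposition7 (Rad Srad L f0 : R) :
  0 < Rad -> 0 < Srad -> 0 < L -> L < Rmin Rad Srad ->
  exists C : R, forall h : R, 0 < h <= 1 ->
    forall w : R -> R -> R,
      is_solution (gamma Rad Srad h) L f0 w ->
      Rabs (energy (gamma Rad Srad h) L w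
            - 72 * PI * (Rabs f0) ^ 2 *
              (radR1 Rad Srad ^ 2 / h
               - 3 * radR1 Rad Srad ^ 4 / radR3 Rad Srad ^ 3 * Rabs (ln h)))
      <= C.
Proof.
  intros HR HS HL HLm.
  destruct (RInt_gap_asymptotics Rad Srad L HR HS HL HLm) as [C HC].
  exists (36 * PI * f0 ^ 2 * C). intros h Hh w Hw.
  rewrite (energy_solution Rad Srad h L HR HS ltac:(lra) HL f0 w Hw).
  rewrite radR1_gap_c1, radR3_cube_gap_c2, pow2_abs by assumption.
  rewrite (Rabs_left1 (ln h)) by (rewrite <- ln_1; apply ln_le; lra).
  pose proof (gap_c1_pos Rad Srad HR HS). pose proof (gap_c2_pos Rad Srad HR HS).
  assert (H36 : 0 <= 36 * PI * f0 ^ 2) by (pose proof PI_RGT_0; pose proof (pow2_ge_0 f0); nra).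
  set (I := RInt (fun q => q / gap Rad Srad h q ^ 3) 0 (L ^ 2)) in *.
  set (a := gap_c1 Rad Srad) in *. set (b := gap_c2 Rad Srad) in *.
  replace (36 * PI * f0 ^ 2 * I - 72 * PI * f0 ^ 2 *
           ((/ (2 * a)) ^ 2 / h - 3 * (/ (2 * a)) ^ 4 / / (8 * b) * - ln h))
    with (36 * PI * f0 ^ 2 * (I - (1 / (2 * a ^ 2 * h) + 3 * b / a ^ 4 * ln h)))
    by (field; repeat split; lra).
  rewrite Rabs_mult, Rabs_pos_eq by exact H36.
  apply Rmult_le_compat_l; [exact H36|apply HC, Hh].
Qed.
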